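(* For a continuous homomorphism of Fréchet algebras $\varphi\colon A\to B$ the following are equivalent: (i) $\varphi$ is an epimorphism in the category of Fréchet algebras; (ii) for each Fréchet $B$-bimodule $X$, the map $\widetilde\varphi_X\colon\mathrm{Der}(B,X)\to\mathrm{Der}(A,X)$, $D\mapsto D\circ\varphi$, is injective; (iii) the image of $\check\varphi\colon B\hat\otimes_A\Omega^1A\hat\otimes_AB\to\Omega^1B$ is dense in $\Omega^1B$.
   Context: Conventions: complex unital Fréchet algebras and (bi)modules; $\hat\otimes$ completed projective tensor product; $M\hat\otimes_AN=(M\hat\otimes N)/\overline{\mathrm{span}}\{xa\otimes y-x\otimes ay\}$. $\mathrm{Der}(A,X)$ is the space of continuous derivations $A\to X$ ($X$ regarded as an $A$-bimodule via $\varphi$). $\Omega^1A=\ker(\mu_A\colon A\hat\otimes A\to A)$ with inclusion $j_A$ and universal derivation $d_A(a)=1\otimes a-a\otimes 1$. $\check\varphi$ is the unique $B$-bimodule morphism with $j_B\circ\check\varphi$ equal to the map $B\hat\otimes_A\Omega^1A\hat\otimes_AB\to B\hat\otimes B$ induced by $j_A$; concretely $b\otimes d_A(a)\otimes c\mapsto b\,d_B(\varphi(a))\,c$. *)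

From HB Require Import structures.
From mathcomp Require Import all_boot all_order all_algebra.
From mathcomp Require Import complex.
From mathcomp Require Import Rstruct.

Set Implicit Arguments.
Unset Strict Implicit.
Unset Printing Implicit Defensive.
Import Order.TTheory GRing.Theory Num.Theory.
Local Open Scope ring_scope.

Notation RR := Rdefinitions.R.
Definition C : fieldType := (Rdefinitions.R)[i].

(* Fréchet spaces are presented (as usual) by a countable family of seminorms.
   [smax p m x] = max_{k <= m} p_k(x); the sets {x | smax p m x < e} form a
   base of 0-neighbourhoods of the induced topology. *)
Definition smax (V : Type) (p : nat -> V -> RR) (m : nat) (x : V) : RR :=
  \big[Num.max/0]_(k < m.+1) p k x.

Definition is_seminorm_family (V : lmodType C) (p : nat -> V -> RR) : Prop :=
  forall n,
    (forall x, 0 <= p n x) /\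
    (forall x y, p n (x + y) <= p n x + p n y) /\
    (forall (a : C) x, p n (a *: x) = ComplexField.Normc.normc a * p n x).

Definition separating (V : lmodType C) (p : nat -> V -> RR) : Prop :=
  forall x, (forall n, p n x = 0) -> x = 0.

Definition cauchy_seq (V : lmodType C) (p : nat -> V -> RR) (u : nat -> V) : Prop :=
  forall n (e : RR), 0 < e -> exists N, forall i j, (N <= i)%N -> (N <= j)%N ->
    p n (u i - u j) < e.

Definition converges_to (V : lmodType C) (p : nat -> V -> RR) (u : nat -> V) (l : V) : Prop :=
  forall n (e : RR), 0 < e -> exists N, forall i, (N <= i)%N -> p n (u i - l) < e.

Definition is_frechet (V : lmodType C) (p : nat -> V -> RR) : Prop :=
  [/\ is_seminorm_family p, separating p &
      forall u, cauchy_seq p u -> exists l, converges_to p u l].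

Definition is_linear (V W : lmodType C) (f : V -> W) : Prop :=
  (forall x y, f (x + y) = f x + f y) /\ (forall (a : C) x, f (a *: x) = a *: f x).

Definition is_bilinear (U V W : lmodType C) (f : U -> V -> W) : Prop :=
  (forall v, is_linear (fun u => f u v)) /\ (forall u, is_linear (f u)).

Definition is_trilinear (U V W Y : lmodType C) (f : U -> V -> W -> Y) : Prop :=
  [/\ forall v w, is_linear (fun u => f u v w),
      forall u w, is_linear (fun v => f u v w) &
      forall u v, is_linear (f u v)].

Definition cont_lin (V W : lmodType C) (p : nat -> V -> RR) (q : nat -> W -> RR)
  (f : V -> W) : Prop :=
  forall n, exists m (c : RR), forall x, q n (f x) <= c * smax p m x.

Definition jcont2 (U V W : lmodType C) (p : nat -> U -> RR) (q : nat -> V -> RR)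
  (r : nat -> W -> RR) (f : U -> V -> W) : Prop :=
  forall n, exists m (c : RR), forall x y, r n (f x y) <= c * smax p m x * smax q m y.

Definition jcont3 (U V W Y : lmodType C) (p : nat -> U -> RR) (q : nat -> V -> RR)
  (r : nat -> W -> RR) (s : nat -> Y -> RR) (f : U -> V -> W -> Y) : Prop :=
  forall n, exists m (c : RR), forall x y z,
    s n (f x y z) <= c * smax p m x * smax q m y * smax r m z.

Definition frechet_alg (A : algType C) (pA : nat -> A -> RR) : Prop :=
  is_frechet pA /\ jcont2 pA pA pA (fun x y : A => x * y).

Definition is_alg_hom (A B : algType C) (f : A -> B) : Prop :=
  [/\ is_linear f, (forall x y, f (x * y) = f x * f y) & f 1 = 1].

Definition frechet_bimod (B : algType C) (pB : nat -> B -> RR)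
  (X : lmodType C) (pX : nat -> X -> RR) (l : B -> X -> X) (r : X -> B -> X) : Prop :=
  [/\ is_frechet pX,
      is_bilinear l /\ jcont2 pB pX pX l,
      is_bilinear r /\ jcont2 pX pB pX r,
      [/\ (forall a b x, l (a * b) x = l a (l b x)), (forall a b x, r x (a * b) = r (r x a) b)
         & (forall a b x, r (l a x) b = l a (r x b))] &
      (forall x, l 1 x = x) /\ (forall x, r x 1 = x)].

(* Continuous derivations S -> X, where X (a B-bimodule) is regarded as an
   S-bimodule via f : S -> B. Der(A,X) is [is_der pA pX phi l r];
   Der(B,X) is [is_der pB pX id l r]. *)
Definition is_der (S B : algType C) (pS : nat -> S -> RR) (X : lmodType C)
  (pX : nat -> X -> RR) (f : S -> B) (l : B -> X -> X) (r : X -> B -> X)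
  (D : S -> X) : Prop :=
  [/\ is_linear D, cont_lin pS pX D &
      forall a b, D (a * b) = l (f a) (D b) + r (D a) (f b)].

Definition frechet_epi (A B : algType C) (pB : nat -> B -> RR) (phi : A -> B) : Prop :=
  forall (D : algType C) (pD : nat -> D -> RR), frechet_alg pD ->
  forall f g : B -> D,
    is_alg_hom f -> cont_lin pB pD f -> is_alg_hom g -> cont_lin pB pD g ->
    (forall a, f (phi a) = g (phi a)) -> forall b, f b = g b.

Definition der_restr_inj (A B : algType C) (pB : nat -> B -> RR) (phi : A -> B) : Prop :=
  forall (X : lmodType C) (pX : nat -> X -> RR) (l : B -> X -> X) (r : X -> B -> X),
    frechet_bimod pB pX l r ->
  forall D1 D2 : B -> X,
    is_der pB pX id l r D1 -> is_der pB pX id l r D2 ->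
    (forall a, D1 (phi a) = D2 (phi a)) -> forall b, D1 b = D2 b.

(* (T, t, tens) is the completed projective tensor product V ^(x) W,
   characterized by its universal property: jointly continuous bilinear maps
   into Fréchet spaces factor uniquely through continuous linear maps. *)
Definition is_proj_tensor (V W T : lmodType C) (p : nat -> V -> RR)
  (q : nat -> W -> RR) (t : nat -> T -> RR) (tens : V -> W -> T) : Prop :=
  [/\ is_frechet t, is_bilinear tens, jcont2 p q t tens &
    forall (Y : lmodType C) (r : nat -> Y -> RR), is_frechet r ->
    forall f : V -> W -> Y, is_bilinear f -> jcont2 p q r f ->
    exists g : T -> Y,
      [/\ is_linear g, cont_lin t r g & forall v w, g (tens v w) = f v w] /\
      (forall g' : T -> Y, is_linear g' -> cont_lin t r g' ->
         (forall v w, g' (tens v w) = f v w) -> forall x, g' x = g x)].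

Definition is_mult_map (A : algType C) (pA : nat -> A -> RR) (T : lmodType C)
  (t : nat -> T -> RR) (tens : A -> A -> T) (mu : T -> A) : Prop :=
  [/\ is_linear mu, cont_lin t pA mu & forall x y, mu (tens x y) = x * y].

Definition tensor_actions (A : algType C) (T : lmodType C) (t : nat -> T -> RR)
  (tens : A -> A -> T) (la : A -> T -> T) (ra : T -> A -> T) : Prop :=
  [/\ forall a, is_linear (la a) /\ cont_lin t t (la a),
      forall a, is_linear (fun w => ra w a) /\ cont_lin t t (fun w => ra w a),
      forall a x y, la a (tens x y) = tens (a * x) y &
      forall a x y, ra (tens x y) a = tens x (y * a)].

(* (O, o, j) is Omega^1 A = ker mu_A with its inclusion j_A into A ^(x) A and
   the relative (subspace) topology. *)
Definition is_omega1 (A : algType C) (T : lmodType C) (t : nat -> T -> RR)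
  (mu : T -> A) (O : lmodType C) (o : nat -> O -> RR) (j : O -> T) : Prop :=
  [/\ is_linear j, injective j, (forall w, mu (j w) = 0),
      (forall x, mu x = 0 -> exists w, j w = x) &
      (forall n w, o n w = t n (j w))].

Definition is_tensor_map (A B : algType C) (TA TB : lmodType C)
  (tA : nat -> TA -> RR) (tB : nat -> TB -> RR) (tensA : A -> A -> TA)
  (tensB : B -> B -> TB) (phi : A -> B) (phiT : TA -> TB) : Prop :=
  [/\ is_linear phiT, cont_lin tA tB phiT &
      forall x y, phiT (tensA x y) = tensB (phi x) (phi y)].

(* A-balanced trilinear maps B x Omega^1 A x B -> Y, where B is an A-bimodule
   via phi and Omega^1 A carries the A-bimodule structure of A ^(x) A. *)
Definition balanced (A B : algType C) (TA O Y : lmodType C) (phi : A -> B)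
  (la : A -> TA -> TA) (ra : TA -> A -> TA) (j : O -> TA) (f : B -> O -> B -> Y) : Prop :=
  (forall a b w w' c, j w' = la a (j w) -> f (b * phi a) w c = f b w' c) /\
  (forall a b w w' c, j w' = ra (j w) a -> f b w' c = f b w (phi a * c)).

(* (Q, q, qt) is B ^(x)_A Omega^1 A ^(x)_A B, characterized by its universal
   property for jointly continuous A-balanced trilinear maps into Fréchet
   spaces (equivalently the quotient of B ^(x) Omega^1 A ^(x) B by the closed
   span of the balancing relations). *)
Definition is_bal_tensor (A B : algType C) (pB : nat -> B -> RR) (TA O : lmodType C)
  (o : nat -> O -> RR) (phi : A -> B) (la : A -> TA -> TA) (ra : TA -> A -> TA)
  (j : O -> TA) (Q : lmodType C) (q : nat -> Q -> RR) (qt : B -> O -> B -> Q) : Prop :=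
  [/\ is_frechet q, is_trilinear qt, jcont3 pB o pB q qt, balanced phi la ra j qt &
    forall (Y : lmodType C) (r : nat -> Y -> RR), is_frechet r ->
    forall f : B -> O -> B -> Y, is_trilinear f -> jcont3 pB o pB r f ->
      balanced phi la ra j f ->
    exists g : Q -> Y,
      [/\ is_linear g, cont_lin q r g & forall b w c, g (qt b w c) = f b w c] /\
      (forall g' : Q -> Y, is_linear g' -> cont_lin q r g' ->
         (forall b w c, g' (qt b w c) = f b w c) -> forall x, g' x = g x)].

(* chk = j_B o phi-check : B ^(x)_A Omega^1 A ^(x)_A B -> B ^(x) B,
   b (x) w (x) c |-> b . (phi ^(x) phi)(j_A w) . c. *)
Definition is_check_map (B : algType C) (TA O TB Q : lmodType C)
  (q : nat -> Q -> RR) (tB : nat -> TB -> RR) (qt : B -> O -> B -> Q)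
  (j : O -> TA) (phiT : TA -> TB) (lb : B -> TB -> TB) (rb : TB -> B -> TB)
  (chk : Q -> TB) : Prop :=
  [/\ is_linear chk, cont_lin q tB chk &
      forall b w c, chk (qt b w c) = lb b (rb (phiT (j w)) c)].

Definition dense_in_omega1 (B : algType C) (TB Q : lmodType C) (tB : nat -> TB -> RR)
  (muB : TB -> B) (chk : Q -> TB) : Prop :=
  forall x, muB x = 0 -> forall m (e : RR), 0 < e -> exists y : Q, smax tB m (x - chk y) < e.

(* (ii) => (i): two continuous homomorphisms [f, g : B -> D] that agree on
   [phi A] make [f - g] a derivation into [D], twisted by [f] on the left and [g]
   on the right.  (i) => (ii): a derivation [D : B -> X] is the same as the
   homomorphism [b |-> (b, D b)] into the square-zero extension [B (+) X], which
   is again a Fréchet algebra.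
   (iii) => (ii): a derivation [D] vanishing on [phi A] lifts to
   [T : B ^(x) B -> X], [T (x (x) y) = x . D y]; [T] vanishes on the image of
   [phi-check] and [T (1 (x) b - b (x) 1) = D b], so [D = 0] by density.
   (ii) => (iii): on the Fréchet [B]-bimodule [X = B ^(x) B / closure (im phi-check)]
   the universal derivation [b |-> 1 (x) b - b (x) 1] vanishes on [phi A], hence
   everywhere, which puts [ker mu_B] into the closure of the image.  The analytic
   work lies in [X] being a Fréchet bimodule: completeness of the quotient
   seminorms, and joint continuity of the module actions on [B ^(x) B]. *)

From HB Require Import structures.
From mathcomp Require Import all_boot all_order all_algebra.
From mathcomp Require Import complex.
From mathcomp Require Import Rstruct.
From mathcomp Require Import ring lra.
From mathcomp Require Import boolp classical_sets reals.
Set Implicit Arguments. Unset Strict Implicit. Unset Printing Implicit Defensive.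
Import Order.TTheory GRing.Theory Num.Theory.
Local Open Scope ring_scope.

(** * Seminorm estimates *)

Local Notation normc := ComplexField.Normc.normc.

Lemma normc_ge0 (a : C) : 0 <= normc a.
Proof. by case: a => x y; exact: sqrtr_ge0. Qed.

Lemma normc_gt0 (a : C) : a != 0 -> 0 < normc a.
Proof.
move=> a0; rewrite lt_def normc_ge0 andbT.
by apply: contra a0 => /eqP /ComplexField.Normc.eq0_normc ->.
Qed.

Lemma le0_mul_eps (a c : RR) : 0 <= c -> (forall e, 0 < e -> a <= c * e) -> a <= 0.
Proof.
move=> c0 h; apply/ler_addgt0Pr => e e0; rewrite add0r.
have c1 : 0 < c + 1 by rewrite ltr_wpDl.
apply: le_trans (h _ (divr_gt0 e0 c1)) _.
rewrite -[X in _ <= X](divfK (lt0r_neq0 c1) e) mulrC ler_wpM2l ?lerDl //.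
exact/ltW/divr_gt0.
Qed.

Lemma le_mul_eps (a c s : RR) : 0 <= s -> (forall e, 0 < e -> a <= (c + e) * s) -> a <= c * s.
Proof.
move=> s0 h; rewrite -subr_le0; apply: (le0_mul_eps s0) => e e0.
by have := h e e0; rewrite mulrDl [e * s]mulrC; lra.
Qed.

Lemma ler_coefM2 (c c' s s' : RR) :
  c <= c' -> 0 <= c' -> 0 <= s -> s <= s' -> c * s <= c' * s'.
Proof. move=> *; nra. Qed.

Lemma ler_coefM3 (c c' s s' u u' : RR) : c <= c' -> 0 <= c' ->
  0 <= s -> s <= s' -> 0 <= u -> u <= u' -> c * s * u <= c' * s' * u'.
Proof.
move=> *; rewrite -!mulrA; apply: ler_coefM2 => //; first exact: mulr_ge0.
exact: ler_pM.
Qed.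

Lemma ler_coefM4 (c c' s s' u u' v v' : RR) : c <= c' -> 0 <= c' ->
  0 <= s -> s <= s' -> 0 <= u -> u <= u' -> 0 <= v -> v <= v' ->
  c * s * u * v <= c' * s' * u' * v'.
Proof.
move=> *; rewrite -!mulrA; apply: ler_coefM2 => //; first by rewrite !mulr_ge0.
by apply: ler_pM => //; [exact: mulr_ge0 | exact: ler_pM].
Qed.

Section Smax.
Variables (V : Type) (p : nat -> V -> RR).

Lemma smax_ge0 m x : 0 <= smax p m x.
Proof. by rewrite /smax; elim/big_rec: _ => // i v _ v0; rewrite le_max v0 orbT. Qed.

Lemma smax_lub m x c : 0 <= c -> (forall k, (k <= m)%N -> p k x <= c) -> smax p m x <= c.
Proof.
move=> c0 h; rewrite /smax; elim/big_rec: _ => // i v _ vc.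
by rewrite ge_max vc andbT h // -ltnS.
Qed.

Lemma le_smax m k x : (k <= m)%N -> p k x <= smax p m x.
Proof.
elim: m k p => [|m ih] [|k] q //= km; rewrite /smax big_ord_recl le_max ?lexx //.
apply/orP; right; apply: le_trans (ih k (fun j => q j.+1) km) _.
by [].
Qed.

Lemma smax_homo m m' x : (m <= m')%N -> smax p m x <= smax p m' x.
Proof.
move=> mm; apply: smax_lub; first exact: smax_ge0.
by move=> k km; apply: le_smax; apply: leq_trans mm.
Qed.

Lemma smax_attained m x : (forall k, 0 <= p k x) -> exists2 k, (k <= m)%N & smax p m x = p k x.
Proof.
move=> h; elim: m => [|m [k km e]].
  exists 0%N => //; apply/eqP; rewrite eq_le le_smax // andbT.
  by apply: smax_lub => // k; rewrite leqn0 => /eqP ->.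
have smaxS : smax p m.+1 x = Num.max (smax p m x) (p m.+1 x).
  apply/eqP; rewrite eq_le [X in _ && X]ge_max le_smax // smax_homo // !andbT.
  apply: smax_lub; first by rewrite le_max smax_ge0.
  move=> k'; rewrite leq_eqVlt => /orP[/eqP ->|]; first by rewrite le_max lexx orbT.
  by rewrite ltnS => km'; rewrite le_max le_smax.
rewrite smaxS e; case: (leP (p k x) (p m.+1 x)) => hk; first by exists m.+1.
by exists k => //; apply: leqW.
Qed.
End Smax.

Section Seminorm.
Variables (V : lmodType C) (p : nat -> V -> RR) (hp : is_seminorm_family p).

Lemma sn_ge0 n x : 0 <= p n x. Proof. by case: (hp n). Qed.
Lemma snD n x y : p n (x + y) <= p n x + p n y. Proof. by case: (hp n) => _ []. Qed.
Lemma snZ n a x : p n (a *: x) = normc a * p n x. Proof. by case: (hp n) => _ []. Qed.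
Lemma sn0 n : p n 0 = 0.
Proof. by rewrite -(scale0r (0 : V)) snZ ComplexField.Normc.normc0 mul0r. Qed.
Lemma snN n x : p n (- x) = p n x.
Proof. by rewrite -scaleN1r snZ (normcN (1 : C)) ComplexField.Normc.normc1 mul1r. Qed.
Lemma snBC n x y : p n (x - y) = p n (y - x).
Proof. by rewrite -snN opprB. Qed.
Lemma snB_trans n x y z : p n (x - z) <= p n (x - y) + p n (y - z).
Proof. by have := snD n (x - y) (y - z); rewrite addrA subrK. Qed.
Lemma sn_le_addB n x y : p n x <= p n y + p n (x - y).
Proof. by have := snD n y (x - y); rewrite addrC subrK. Qed.

Lemma seminorm_family_smax : is_seminorm_family (smax p).
Proof.
move=> n; split; first by move=> x; apply: smax_ge0.
split.
  move=> x y; apply: smax_lub; first by rewrite addr_ge0 // smax_ge0.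
  by move=> k kn; apply: le_trans (snD k x y) _; rewrite lerD // le_smax.
move=> a x.
have [k kn eA] := smax_attained n (fun k => sn_ge0 k (a *: x)).
have [k' kn' eX] := smax_attained n (fun k => sn_ge0 k x).
apply/eqP; rewrite eq_le; apply/andP; split.
  by rewrite eA snZ ler_wpM2l ?normc_ge0 // le_smax.
by rewrite eX -snZ le_smax.
Qed.
End Seminorm.

Lemma normc_homogeneous (V : lmodType C) (f : V -> RR) :
  (forall x, 0 <= f x) -> (forall a x, f (a *: x) <= normc a * f x) ->
  forall a x, f (a *: x) = normc a * f x.
Proof.
move=> f0 fZ a x; apply/eqP; rewrite eq_le fZ /=.
have [->|a0] := eqVneq a 0; first by rewrite ComplexField.Normc.normc0 mul0r f0.
have na0 := normc_gt0 a0.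
have := fZ a^-1 (a *: x); rewrite scalerA mulVf // scale1r ComplexField.Normc.normcV => h.
by have := ler_wpM2l (ltW na0) h; rewrite mulrA mulfV ?mul1r // lt0r_neq0.
Qed.

Lemma frechet_seminorm (V : lmodType C) (p : nat -> V -> RR) :
  is_frechet p -> is_seminorm_family p.
Proof. by case. Qed.

Section Linear.
Variables (V W : lmodType C) (f : V -> W) (hf : is_linear f).
Lemma is_linearD x y : f (x + y) = f x + f y. Proof. by case: hf. Qed.
Lemma is_linearZ a x : f (a *: x) = a *: f x. Proof. by case: hf. Qed.
Lemma is_linear0 : f 0 = 0. Proof. by rewrite -(scale0r (0 : V)) is_linearZ scale0r. Qed.
Lemma is_linearN x : f (- x) = - f x. Proof. by rewrite -scaleN1r is_linearZ scaleN1r. Qed.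
Lemma is_linearB x y : f (x - y) = f x - f y. Proof. by rewrite is_linearD is_linearN. Qed.
End Linear.

Lemma is_linear_comp (U V W : lmodType C) (f : U -> V) (g : V -> W) :
  is_linear f -> is_linear g -> is_linear (fun x => g (f x)).
Proof. by move=> hf hg; split => [x y|a x]; rewrite ?is_linearD ?is_linearZ. Qed.

Lemma is_linear_id (U : lmodType C) : is_linear (fun x : U => x). Proof. by []. Qed.

Lemma is_linear_cst0 (U V : lmodType C) : is_linear (fun _ : U => 0 : V).
Proof. by split => [x y|a x]; rewrite ?addr0 ?scaler0. Qed.

Lemma is_linearB_fun (U V : lmodType C) (f g : U -> V) :
  is_linear f -> is_linear g -> is_linear (fun x => f x - g x).
Proof.
move=> hf hg; split => [x y|a x].
  by rewrite (is_linearD hf) (is_linearD hg) opprD addrACA.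
by rewrite (is_linearZ hf) (is_linearZ hg) scalerBr.
Qed.

Lemma is_linearD_fun (U V : lmodType C) (f g : U -> V) :
  is_linear f -> is_linear g -> is_linear (fun x => f x + g x).
Proof.
move=> hf hg; split => [x y|a x]; first by rewrite (is_linearD hf) (is_linearD hg) addrACA.
by rewrite (is_linearZ hf) (is_linearZ hg) scalerDr.
Qed.

Lemma is_linearZ_fun (U V : lmodType C) (f : U -> V) a :
  is_linear f -> is_linear (fun x => a *: f x).
Proof.
move=> hf; split => [x y|b x]; first by rewrite (is_linearD hf) scalerDr.
by rewrite (is_linearZ hf) !scalerA mulrC.
Qed.

Lemma is_bilinear_comp (U V W Y : lmodType C) (f : U -> V -> W) (g : W -> Y) :
  is_bilinear f -> is_linear g -> is_bilinear (fun x y => g (f x y)).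
Proof. by move=> [h1 h2] hg; split => [v|u]; exact: is_linear_comp. Qed.

Lemma is_trilinear_comp (U V W Y Z : lmodType C) (f : U -> V -> W -> Y) (g : Y -> Z) :
  is_trilinear f -> is_linear g -> is_trilinear (fun x y z => g (f x y z)).
Proof. by move=> [h1 h2 h3] hg; split => *; exact: is_linear_comp. Qed.

Lemma bound_upto (P : nat -> nat -> RR -> Prop) :
  (forall k m m' c c', (m <= m')%N -> c <= c' -> 0 <= c' -> P k m c -> P k m' c') ->
  (forall k, exists m c, P k m c) ->
  forall n, exists m c, 0 <= c /\ forall k, (k <= n)%N -> P k m c.
Proof.
move=> mono h; elim=> [|n [m [c [c0 ih]]]].
  have [m [c hc]] := h 0%N; exists m, (Num.max c 0).
  split=> [|k]; first by rewrite le_max lexx orbT.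
  rewrite leqn0 => /eqP ->; apply: (mono _ m m c) => //.
    by rewrite le_max lexx.
  by rewrite le_max lexx orbT.
have [m' [c' hc']] := h n.+1.
have hM : 0 <= Num.max c (Num.max c' 0) by rewrite !le_max lexx !orbT.
exists (maxn m m'), (Num.max c (Num.max c' 0)); split => // k.
rewrite leq_eqVlt => /orP[/eqP ->|].
  apply: (mono _ m' _ c') => //; first exact: leq_maxr.
  by rewrite !le_max lexx !orbT.
rewrite ltnS => kn; apply: (mono k m _ c _ _ _ _ (ih k kn)) => //; first exact: leq_maxl.
by rewrite !le_max lexx.
Qed.

Section Continuity.
Variables (U V W Y : lmodType C) (p : nat -> U -> RR) (q : nat -> V -> RR)
  (r : nat -> W -> RR) (s : nat -> Y -> RR).

Lemma cont_lin_smax (f : U -> V) : cont_lin p q f ->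
  forall n, exists m c, 0 <= c /\ forall x, smax q n (f x) <= c * smax p m x.
Proof.
move=> h n.
have [m [c [c0 hk]]] := @bound_upto (fun k m c => forall x, q k (f x) <= c * smax p m x)
  (fun k m m' c c' mm cc c'0 H x =>
     le_trans (H x) (ler_coefM2 cc c'0 (smax_ge0 _ _ _) (smax_homo _ _ mm))) h n.
exists m, c; split => // x; apply: smax_lub; first by rewrite mulr_ge0 // smax_ge0.
by move=> k kn; apply: hk.
Qed.

Lemma jcont2_smax (f : U -> V -> W) : jcont2 p q r f ->
  forall n, exists m c, 0 <= c /\ forall x y, smax r n (f x y) <= c * smax p m x * smax q m y.
Proof.
move=> h n.
have [m [c [c0 hk]]] := @bound_upto
  (fun k m c => forall x y, r k (f x y) <= c * smax p m x * smax q m y)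
  (fun k m m' c c' mm cc c'0 H x y => le_trans (H x y) (ler_coefM3 cc c'0
     (smax_ge0 _ _ _) (smax_homo _ _ mm) (smax_ge0 _ _ _) (smax_homo _ _ mm))) h n.
exists m, c; split => // x y; apply: smax_lub; first by rewrite !mulr_ge0 // smax_ge0.
by move=> k kn; apply: hk.
Qed.

Lemma jcont3_smax (f : U -> V -> W -> Y) : jcont3 p q r s f ->
  forall n, exists m c, 0 <= c /\
    forall x y z, smax s n (f x y z) <= c * smax p m x * smax q m y * smax r m z.
Proof.
move=> h n.
have [m [c [c0 hk]]] := @bound_upto
  (fun k m c => forall x y z, s k (f x y z) <= c * smax p m x * smax q m y * smax r m z)
  (fun k m m' c c' mm cc c'0 H x y z => le_trans (H x y z) (ler_coefM4 cc c'0
     (smax_ge0 _ _ _) (smax_homo _ _ mm) (smax_ge0 _ _ _) (smax_homo _ _ mm)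
     (smax_ge0 _ _ _) (smax_homo _ _ mm))) h n.
exists m, c; split => // x y z; apply: smax_lub; first by rewrite !mulr_ge0 // smax_ge0.
by move=> k kn; apply: hk.
Qed.

End Continuity.

Section Composition.
Variables (U V W Y : lmodType C) (p : nat -> U -> RR) (q : nat -> V -> RR)
  (r : nat -> W -> RR) (s : nat -> Y -> RR).

Lemma cont_lin_comp (f : U -> V) (g : V -> W) :
  cont_lin p q f -> cont_lin q r g -> cont_lin p r (fun x => g (f x)).
Proof.
move=> /cont_lin_smax hf /cont_lin_smax hg n.
have [m [c [c0 H]]] := hg n; have [m' [c' [c'0 H']]] := hf m.
exists m', (c * c') => x; apply: le_trans (@le_smax _ _ n n _ (leqnn n)) _.
by apply: le_trans (H (f x)) _; rewrite -mulrA ler_wpM2l.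
Qed.

Lemma jcont2_comp (f : U -> V -> W) (g : W -> Y) :
  jcont2 p q r f -> cont_lin r s g -> jcont2 p q s (fun x y => g (f x y)).
Proof.
move=> /jcont2_smax hf /cont_lin_smax hg n.
have [m [c [c0 H]]] := hg n; have [m' [c' [c'0 H']]] := hf m.
exists m', (c * c') => x y; apply: le_trans (@le_smax _ _ n n _ (leqnn n)) _.
by apply: le_trans (H (f x y)) _; rewrite -!mulrA ler_wpM2l // !mulrA.
Qed.

Lemma cont_lin_id : cont_lin p p (fun x => x).
Proof. by move=> n; exists n, 1 => x; rewrite mul1r le_smax. Qed.

Lemma jcont2_contl (f : U -> V -> W) y : jcont2 p q r f -> cont_lin p r (fun x => f x y).
Proof.
move=> hf n; have [m [c H]] := hf n; exists m, (c * smax q m y) => x.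
by apply: le_trans (H x y) _; rewrite -mulrA [smax p m x * _]mulrC mulrA.
Qed.

Lemma jcont2_contr (f : U -> V -> W) x : jcont2 p q r f -> cont_lin q r (f x).
Proof. by move=> hf n; have [m [c H]] := hf n; exists m, (c * smax p m x); exact: H x. Qed.
End Composition.

Section Precomposition.
Variables (U V W Y U' V' W' : lmodType C) (p : nat -> U -> RR) (q : nat -> V -> RR)
  (r : nat -> W -> RR) (s : nat -> Y -> RR)
  (p' : nat -> U' -> RR) (q' : nat -> V' -> RR) (r' : nat -> W' -> RR).

Lemma jcont3_comp (f : U -> V -> W -> Y) (Z : lmodType C) (t : nat -> Z -> RR) (g : Y -> Z) :
  jcont3 p q r s f -> cont_lin s t g -> jcont3 p q r t (fun x y z => g (f x y z)).
Proof.
move=> /jcont3_smax hf /cont_lin_smax hg n.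
have [m [c [c0 H]]] := hg n; have [m' [c' [c'0 H']]] := hf m.
exists m', (c * c') => x y z; apply: le_trans (@le_smax _ t n n _ (leqnn n)) _.
by apply: le_trans (H (f x y z)) _; rewrite -!mulrA ler_wpM2l // !mulrA.
Qed.

Lemma jcont2_compr (f : U -> V -> W) (h1 : U' -> U) (h2 : V' -> V) :
  jcont2 p q r f -> cont_lin p' p h1 -> cont_lin q' q h2 ->
  jcont2 p' q' r (fun x y => f (h1 x) (h2 y)).
Proof.
move=> /jcont2_smax hf /cont_lin_smax g1 /cont_lin_smax g2 n.
have [m [c [c0 H]]] := hf n.
have [m1 [c1 [c10 H1]]] := g1 m; have [m2 [c2 [c20 H2]]] := g2 m.
set M := maxn m1 m2.
exists M, (c * c1 * c2) => x y; apply: le_trans (@le_smax _ r n n _ (leqnn n)) _.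
apply: le_trans (H _ _) _.
have -> : c * c1 * c2 * smax p' M x * smax q' M y =
  c * (c1 * smax p' M x) * (c2 * smax q' M y) by ring.
apply: ler_coefM3 => //; try exact: smax_ge0.
  by apply: le_trans (H1 x) _; rewrite ler_wpM2l // smax_homo // leq_maxl.
by apply: le_trans (H2 y) _; rewrite ler_wpM2l // smax_homo // leq_maxr.
Qed.

Lemma jcont3_compr (f : U -> V -> W -> Y) (h1 : U' -> U) (h2 : V' -> V) (h3 : W' -> W) :
  jcont3 p q r s f -> cont_lin p' p h1 -> cont_lin q' q h2 -> cont_lin r' r h3 ->
  jcont3 p' q' r' s (fun x y z => f (h1 x) (h2 y) (h3 z)).
Proof.
move=> /jcont3_smax hf /cont_lin_smax g1 /cont_lin_smax g2 /cont_lin_smax g3 n.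
have [m [c [c0 H]]] := hf n; have [m1 [c1 [c10 H1]]] := g1 m.
have [m2 [c2 [c20 H2]]] := g2 m; have [m3 [c3 [c30 H3]]] := g3 m.
set M := maxn m1 (maxn m2 m3).
have [m1M m2M m3M] : [/\ (m1 <= M)%N, (m2 <= M)%N & (m3 <= M)%N].
  by rewrite !leq_max !leqnn !orbT.
exists M, (c * c1 * c2 * c3) => x y z; apply: le_trans (@le_smax _ s n n _ (leqnn n)) _.
apply: le_trans (H _ _ _) _.
have -> : c * c1 * c2 * c3 * smax p' M x * smax q' M y * smax r' M z =
  c * (c1 * smax p' M x) * (c2 * smax q' M y) * (c3 * smax r' M z) by ring.
apply: ler_coefM4 => //; try exact: smax_ge0.
- by apply: le_trans (H1 x) _; rewrite ler_wpM2l // smax_homo.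
- by apply: le_trans (H2 y) _; rewrite ler_wpM2l // smax_homo.
- by apply: le_trans (H3 z) _; rewrite ler_wpM2l // smax_homo.
Qed.
End Precomposition.

Section ContinuityAlgebra.
Variables (U V : lmodType C) (p : nat -> U -> RR) (q : nat -> V -> RR).
Hypothesis hq : is_seminorm_family q.

Lemma cont_linD (f g : U -> V) :
  cont_lin p q f -> cont_lin p q g -> cont_lin p q (fun x => f x + g x).
Proof.
move=> /cont_lin_smax hf /cont_lin_smax hg n.
have [m [c [c0 H]]] := hf n; have [m' [c' [c'0 H']]] := hg n.
exists (maxn m m'), (c + c') => x.
apply: le_trans (snD hq _ _ _) _; rewrite mulrDl lerD //.
  apply: le_trans (@le_smax _ q n n _ (leqnn n)) _; apply: le_trans (H x) _.
  by rewrite ler_wpM2l // smax_homo // leq_maxl.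
apply: le_trans (@le_smax _ q n n _ (leqnn n)) _; apply: le_trans (H' x) _.
by rewrite ler_wpM2l // smax_homo // leq_maxr.
Qed.

Lemma cont_linB (f g : U -> V) :
  cont_lin p q f -> cont_lin p q g -> cont_lin p q (fun x => f x - g x).
Proof.
move=> hf hg; apply: cont_linD => // n.
by have [m [c H]] := hg n; exists m, c => x; rewrite snN.
Qed.

Lemma cont_lin0 : cont_lin p q (fun _ => 0).
Proof. by move=> n; exists 0%N, 0 => x; rewrite sn0 // mul0r. Qed.
End ContinuityAlgebra.

Lemma cont_linZ (U V : lmodType C) (p : nat -> U -> RR) (q : nat -> V -> RR) (f : U -> V) a :
  is_seminorm_family q -> cont_lin p q f -> cont_lin p q (fun x => a *: f x).
Proof.
move=> hq hf n; have [m [c H]] := hf n; exists m, (normc a * c) => x.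
by rewrite (snZ hq) -mulrA ler_wpM2l ?normc_ge0.
Qed.

Lemma proj_tensor_ext (V W T : lmodType C) p q t (tens : V -> W -> T)
  (Y : lmodType C) (r : nat -> Y -> RR) (g1 g2 : T -> Y) :
  is_proj_tensor p q t tens -> is_frechet r ->
  is_linear g1 -> cont_lin t r g1 -> is_linear g2 -> cont_lin t r g2 ->
  (forall v w, g1 (tens v w) = g2 (tens v w)) -> forall x, g1 x = g2 x.
Proof.
case=> _ hb hc U hY l1 k1 l2 k2 e.
have [g [_ H]] := U Y r hY _ (is_bilinear_comp hb l1) (jcont2_comp hc k1).
by move=> x; rewrite (H g1 l1 k1) // (H g2 l2 k2).
Qed.

Lemma bal_tensor_ext (A B : algType C) (pB : nat -> B -> RR) (TA O : lmodType C)
  (o : nat -> O -> RR) (phi : A -> B) la ra (j : O -> TA) (Q : lmodType C)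
  (q : nat -> Q -> RR) qt (Y : lmodType C) (r : nat -> Y -> RR) (g1 g2 : Q -> Y) :
  is_bal_tensor pB o phi la ra j q qt -> is_frechet r ->
  is_linear g1 -> cont_lin q r g1 -> is_linear g2 -> cont_lin q r g2 ->
  (forall b w c, g1 (qt b w c) = g2 (qt b w c)) -> forall x, g1 x = g2 x.
Proof.
case=> _ ht hc [hb1 hb2] U hY l1 k1 l2 k2 e.
have bal : balanced phi la ra j (fun b w c => g1 (qt b w c)).
  by split=> a b w w' c hw; [rewrite (hb1 a b w w' c hw) | rewrite (hb2 a b w w' c hw)].
have [g [_ H]] := U Y r hY _ (is_trilinear_comp ht l1) (jcont3_comp hc k1) bal.
by move=> x; rewrite (H g1 l1 k1) // (H g2 l2 k2).
Qed.

(** * Derivations and epimorphisms *)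

Section BimoduleLaws.
Variables (B : algType C) (pB : nat -> B -> RR) (X : lmodType C) (pX : nat -> X -> RR).
Variables (l : B -> X -> X) (r : X -> B -> X) (bm : frechet_bimod pB pX l r).

Lemma bimod_frechet : is_frechet pX. Proof. by case: bm. Qed.
Lemma lact_linear1 x : is_linear (fun b => l b x). Proof. by case: bm => _ [[]]. Qed.
Lemma lact_linear2 b : is_linear (l b). Proof. by case: bm => _ [[]]. Qed.
Lemma ract_linear1 b : is_linear (fun x => r x b). Proof. by case: bm => _ _ [[]]. Qed.
Lemma ract_linear2 x : is_linear (r x). Proof. by case: bm => _ _ [[]]. Qed.
Lemma lact_jcont : jcont2 pB pX pX l. Proof. by case: bm => _ []. Qed.
Lemma ract_jcont : jcont2 pX pB pX r. Proof. by case: bm => _ _ []. Qed.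
Lemma lactA a b x : l (a * b) x = l a (l b x). Proof. by case: bm => _ _ _ []. Qed.
Lemma ractA a b x : r x (a * b) = r (r x a) b. Proof. by case: bm => _ _ _ []. Qed.
Lemma lractA a b x : r (l a x) b = l a (r x b). Proof. by case: bm => _ _ _ []. Qed.
Lemma lact1 x : l 1 x = x. Proof. by case: bm => _ _ _ _ []. Qed.
Lemma ract1 x : r x 1 = x. Proof. by case: bm => _ _ _ _ []. Qed.

Lemma der1 (D : B -> X) : is_der pB pX id l r D -> D 1 = 0.
Proof.
case=> _ _ /(_ 1 1); rewrite mulr1 /= lact1 ract1 => h.
by apply: (addrI (D 1)); rewrite addr0 -h.
Qed.

Lemma is_der0 : is_der pB pX id l r (fun _ => 0).
Proof.
split; [exact: is_linear_cst0 | exact: cont_lin0 (frechet_seminorm bimod_frechet) |].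
by move=> a b; rewrite (is_linear0 (lact_linear2 a)) (is_linear0 (ract_linear1 b)) addr0.
Qed.

Lemma is_derB (D1 D2 : B -> X) :
  is_der pB pX id l r D1 -> is_der pB pX id l r D2 ->
  is_der pB pX id l r (fun b => D1 b - D2 b).
Proof.
move=> [D1l D1c D1M] [D2l D2c D2M]; split.
- exact: is_linearB_fun.
- exact (cont_linB (frechet_seminorm bimod_frechet) D1c D2c).
- move=> a b; rewrite D1M D2M /= (is_linearB (lact_linear2 a)).
  by rewrite (is_linearB (ract_linear1 b)) opprD addrACA.
Qed.
End BimoduleLaws.

Lemma der_restr_injP (A B : algType C) (pB : nat -> B -> RR) (phi : A -> B) :
  der_restr_inj pB phi <->
  forall (X : lmodType C) (pX : nat -> X -> RR) (l : B -> X -> X) (r : X -> B -> X),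
    frechet_bimod pB pX l r -> forall D : B -> X, is_der pB pX id l r D ->
    (forall a, D (phi a) = 0) -> forall b, D b = 0.
Proof.
split=> [inj X pX l r bm D hD D0 b | H X pX l r bm D1 D2 hD1 hD2 e b].
  exact: inj X pX l r bm D _ hD (is_der0 bm) D0 b.
apply/eqP; rewrite -subr_eq0; apply/eqP.
by apply: (H X pX l r bm _ (is_derB bm hD1 hD2)) => a; rewrite e subrr.
Qed.

Section TwistedBimodule.
Variables (B D : algType C) (pB : nat -> B -> RR) (pD : nat -> D -> RR) (f g : B -> D).
Hypotheses (hD : frechet_alg pD) (hf : is_alg_hom f) (cf : cont_lin pB pD f).
Hypotheses (hg : is_alg_hom g) (cg : cont_lin pB pD g).

Let lf : is_linear f. Proof. by case: hf. Qed.
Let lg : is_linear g. Proof. by case: hg. Qed.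
Let fM x y : f (x * y) = f x * f y. Proof. by case: hf. Qed.
Let gM x y : g (x * y) = g x * g y. Proof. by case: hg. Qed.

Lemma frechet_bimod_twisted : frechet_bimod pB pD (fun b x => f b * x) (fun x b => x * g b).
Proof.
case: hD => fD mD; split => //.
- split; last exact: jcont2_compr mD cf (cont_lin_id pD).
  split=> [x|b]; split=> [y z|a y] /=.
  + by rewrite (is_linearD lf) mulrDl.
  + by rewrite (is_linearZ lf) -scalerAl.
  + by rewrite mulrDr.
  + by rewrite scalerAr.
- split; last exact: jcont2_compr mD (cont_lin_id pD) cg.
  split=> [b|x]; split=> [y z|a y] /=.
  + by rewrite mulrDl.
  + by rewrite -scalerAl.
  + by rewrite (is_linearD lg) mulrDr.
  + by rewrite (is_linearZ lg) scalerAr.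
- by split=> a b x; rewrite ?fM ?gM !mulrA.
- by case: hf => _ _ ->; case: hg => _ _ ->; split=> x; rewrite ?mul1r ?mulr1.
Qed.

Lemma is_der_homB :
  is_der pB pD id (fun b x => f b * x) (fun x b => x * g b) (fun b => f b - g b).
Proof.
split; [exact: is_linearB_fun | exact (cont_linB (frechet_seminorm (proj1 hD)) cf cg) |].
by move=> a b /=; rewrite fM gM mulrBr mulrBl addrA subrK.
Qed.
End TwistedBimodule.

Lemma der_restr_inj_frechet_epi (A B : algType C) (pB : nat -> B -> RR) (phi : A -> B) :
  der_restr_inj pB phi -> frechet_epi pB phi.
Proof.
move=> /der_restr_injP inj D pD hD f g hf cf hg cg e b.
apply/eqP; rewrite -subr_eq0; apply/eqP.
apply: (inj _ _ _ _ (frechet_bimod_twisted hD hf cf hg cg) _ (is_der_homB hD hf cf hg cg)).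
by move=> a; rewrite e subrr.
Qed.

Section SquareZero.
Variables (B : algType C) (pB : nat -> B -> RR) (X : lmodType C) (pX : nat -> X -> RR).
Variables (l : B -> X -> X) (r : X -> B -> X).

(* The carrier [B * X] is indexed by [bm] so that the ring instance below can
   use the bimodule laws. *)
Definition sqz_ext (bm : frechet_bimod pB pX l r) := (B * X)%type.
Variable bm : frechet_bimod pB pX l r.
HB.instance Definition _ := GRing.Lmodule.on (sqz_ext bm).

Definition sqz_one : sqz_ext bm := (1, 0).
Definition sqz_mul (u v : sqz_ext bm) : sqz_ext bm := (u.1 * v.1, l u.1 v.2 + r u.2 v.1).

Let lL := lact_linear1 bm.
Let lR := lact_linear2 bm.
Let rL := ract_linear1 bm.
Let rR := ract_linear2 bm.

Lemma sqz_mulA : associative sqz_mul.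
Proof.
move=> [a x] [b y] [c z]; rewrite /sqz_mul /=; congr (_, _); first by rewrite mulrA.
by rewrite (is_linearD (lR a)) (is_linearD (rL c)) (lactA bm) (ractA bm) (lractA bm) addrA.
Qed.
Lemma sqz_mul1r : left_id sqz_one sqz_mul.
Proof. by move=> [a x]; rewrite /sqz_mul /= mul1r (lact1 bm) (is_linear0 (rL a)) addr0. Qed.
Lemma sqz_mulr1 : right_id sqz_one sqz_mul.
Proof. by move=> [a x]; rewrite /sqz_mul /= mulr1 (ract1 bm) (is_linear0 (lR a)) add0r. Qed.
Lemma sqz_mulDl : left_distributive sqz_mul +%R.
Proof.
move=> [a x] [b y] [c z]; rewrite /sqz_mul /=; congr (_, _); first by rewrite mulrDl.
by rewrite (is_linearD (lL z)) (is_linearD (rL c)) addrACA.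
Qed.
Lemma sqz_mulDr : right_distributive sqz_mul +%R.
Proof.
move=> [a x] [b y] [c z]; rewrite /sqz_mul /=; congr (_, _); first by rewrite mulrDr.
by rewrite (is_linearD (lR a)) (is_linearD (rR x)) addrACA.
Qed.
Lemma sqz_one_neq0 : sqz_one != 0.
Proof. by apply/negP => /eqP [] /eqP; rewrite oner_eq0. Qed.
HB.instance Definition _ := GRing.Zmodule_isNzRing.Build (sqz_ext bm)
  sqz_mulA sqz_mul1r sqz_mulr1 sqz_mulDl sqz_mulDr sqz_one_neq0.

Lemma sqz_scalerAl (a : C) (u v : sqz_ext bm) : a *: (u * v) = (a *: u) * v.
Proof.
move: u v => [b x] [c y]; rewrite /GRing.mul /= /sqz_mul /=; congr (_, _).
  by rewrite scalerAl.
by rewrite scalerDr (is_linearZ (lL y)) (is_linearZ (rL c)).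
Qed.
HB.instance Definition _ := GRing.Lmodule_isLalgebra.Build C (sqz_ext bm) sqz_scalerAl.

Lemma sqz_scalerAr (a : C) (u v : sqz_ext bm) : a *: (u * v) = u * (a *: v).
Proof.
move: u v => [b x] [c y]; rewrite /GRing.mul /= /sqz_mul /=; congr (_, _).
  by rewrite scalerAr.
by rewrite scalerDr (is_linearZ (lR b)) (is_linearZ (rR x)).
Qed.
HB.instance Definition _ := GRing.Lalgebra_isAlgebra.Build C (sqz_ext bm) sqz_scalerAr.

Lemma sqz_mulE (u v : sqz_ext bm) : u * v = (u.1 * v.1, l u.1 v.2 + r u.2 v.1).
Proof. by []. Qed.

Definition sqz_sn (n : nat) (u : sqz_ext bm) : RR := pB n u.1 + pX n u.2.

Hypothesis hB : frechet_alg pB.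
Let snB := frechet_seminorm (proj1 hB).
Let fX := bimod_frechet bm.
Let snX := frechet_seminorm fX.

Lemma seminorm_family_sqz : is_seminorm_family sqz_sn.
Proof.
move=> n; split; first by move=> u; rewrite /sqz_sn addr_ge0 // sn_ge0.
split; last by move=> a u; rewrite /sqz_sn /= (snZ snB) (snZ snX) mulrDr.
move=> u v; rewrite /sqz_sn /=.
by have := snD snB n u.1 v.1; have := snD snX n u.2 v.2; lra.
Qed.

Lemma smax_sqz_fst m M (u : sqz_ext bm) : (m <= M)%N -> smax pB m u.1 <= smax sqz_sn M u.
Proof.
move=> mM; apply: smax_lub; first exact: smax_ge0.
move=> k km; apply: le_trans (le_smax sqz_sn u (leq_trans km mM)).
by rewrite /sqz_sn lerDl sn_ge0.
Qed.

Lemma smax_sqz_snd m M (u : sqz_ext bm) : (m <= M)%N -> smax pX m u.2 <= smax sqz_sn M u.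
Proof.
move=> mM; apply: smax_lub; first exact: smax_ge0.
move=> k km; apply: le_trans (le_smax sqz_sn u (leq_trans km mM)).
by rewrite /sqz_sn lerDr sn_ge0.
Qed.

Lemma sqz_sn_sep : separating sqz_sn.
Proof.
case: hB => [[_ sepB _] _]; case: fX => _ sepX _.
move=> [b x] H; have [hb hx] : (forall n, pB n b = 0) /\ (forall n, pX n x = 0).
  split=> n; have := H n; rewrite /sqz_sn /= => e; apply/eqP; rewrite eq_le sn_ge0 // andbT -e.
    by rewrite lerDl sn_ge0.
  by rewrite lerDr sn_ge0.
by rewrite (sepB b hb) (sepX x hx).
Qed.

Lemma sqz_sn_complete u : cauchy_seq sqz_sn u -> exists l, converges_to sqz_sn u l.
Proof.
case: hB => [[_ _ cB] _]; case: fX => _ _ cX => hu.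
have [lb hlb] : exists lb, converges_to pB (fun i => (u i).1) lb.
  apply: cB => n e e0; have [N HN] := hu n e e0; exists N => i j iN jN.
  by apply: le_lt_trans (HN i j iN jN); rewrite /sqz_sn lerDl sn_ge0.
have [lx hlx] : exists lx, converges_to pX (fun i => (u i).2) lx.
  apply: cX => n e e0; have [N HN] := hu n e e0; exists N => i j iN jN.
  by apply: le_lt_trans (HN i j iN jN); rewrite /sqz_sn lerDr sn_ge0.
exists ((lb, lx) : sqz_ext bm) => n e e0.
have e20 : 0 < e / 2 by rewrite divr_gt0.
have [N1 H1] := hlb n _ e20; have [N2 H2] := hlx n _ e20.
exists (maxn N1 N2) => i iN; rewrite /sqz_sn /=.
have := H1 i (leq_trans (leq_maxl _ _) iN); have := H2 i (leq_trans (leq_maxr _ _) iN).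
have : e / 2 + e / 2 = e by rewrite -splitr.
by move: (pB n _) (pX n _) => *; lra.
Qed.

Lemma sqz_mul_jcont : jcont2 sqz_sn sqz_sn sqz_sn (fun u v : sqz_ext bm => u * v).
Proof.
case: hB => _ /jcont2_smax hm; move: (lact_jcont bm) (ract_jcont bm).
move=> /jcont2_smax hl /jcont2_smax hr n.
have [m1 [k1 [k10 H1]]] := hm n; have [m2 [k2 [k20 H2]]] := hl n.
have [m3 [k3 [k30 H3]]] := hr n.
set M := maxn m1 (maxn m2 m3).
have [m1M m2M m3M] : [/\ (m1 <= M)%N, (m2 <= M)%N & (m3 <= M)%N].
  by rewrite !leq_max !leqnn !orbT.
set su := smax sqz_sn M; exists M, (k1 + k2 + k3) => u v.
rewrite /sqz_sn sqz_mulE /=; apply: le_trans (lerD (lexx _) (snD snX _ _ _)) _.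
have t1 : pB n (u.1 * v.1) <= k1 * su u * su v.
  apply: le_trans (@le_smax _ pB n n _ (leqnn n)) _; apply: le_trans (H1 _ _) _.
  by apply: ler_coefM3 => //; try exact: smax_ge0; exact: smax_sqz_fst.
have t2 : pX n (l u.1 v.2) <= k2 * su u * su v.
  apply: le_trans (@le_smax _ pX n n _ (leqnn n)) _; apply: le_trans (H2 _ _) _.
  by apply: ler_coefM3 => //; try exact: smax_ge0; [exact: smax_sqz_fst | exact: smax_sqz_snd].
have t3 : pX n (r u.2 v.1) <= k3 * su u * su v.
  apply: le_trans (@le_smax _ pX n n _ (leqnn n)) _; apply: le_trans (H3 _ _) _.
  by apply: ler_coefM3 => //; try exact: smax_ge0; [exact: smax_sqz_snd | exact: smax_sqz_fst].
by rewrite !mulrDl -addrA lerD // lerD.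
Qed.

Lemma frechet_alg_sqz : frechet_alg sqz_sn.
Proof.
split; last exact: sqz_mul_jcont.
by split; [exact: seminorm_family_sqz | exact: sqz_sn_sep | exact: sqz_sn_complete].
Qed.

Definition sqz_graph (D : B -> X) (b : B) : sqz_ext bm := (b, D b).

Lemma sqz_graph_alg_hom D : is_der pB pX id l r D -> is_alg_hom (sqz_graph D).
Proof.
move=> hD; have D1 := der1 bm hD; case: hD => Dl _ DM; split.
- by split => [x y|a x]; rewrite /sqz_graph ?(is_linearD Dl) ?(is_linearZ Dl).
- by move=> x y; rewrite sqz_mulE /sqz_graph /= DM.
- by rewrite /sqz_graph D1.
Qed.

Lemma sqz_graph_cont D : is_der pB pX id l r D -> cont_lin pB sqz_sn (sqz_graph D).
Proof.
case=> _ /cont_lin_smax Dc _ n; have [m [c [c0 H]]] := Dc n.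
exists (maxn n m), (1 + c) => x; apply: le_trans (@le_smax _ _ n n _ (leqnn n)) _.
apply: smax_lub; first by rewrite mulr_ge0 ?addr_ge0 ?smax_ge0.
move=> k kn; rewrite /sqz_sn /= mulrDl mul1r lerD //.
  by apply: le_trans (le_smax pB x kn) _; rewrite smax_homo // leq_maxl.
apply: le_trans (le_smax pX (D x) kn) _; apply: le_trans (H x) _.
by rewrite ler_wpM2l // smax_homo // leq_maxr.
Qed.
End SquareZero.

Lemma frechet_epi_der_restr_inj (A B : algType C) (pB : nat -> B -> RR) (phi : A -> B) :
  frechet_alg pB -> frechet_epi pB phi -> der_restr_inj pB phi.
Proof.
move=> hB epi X pX l r bm D1 D2 hD1 hD2 e b.
have agree a : sqz_graph bm D1 (phi a) = sqz_graph bm D2 (phi a) by rewrite /sqz_graph e.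
have := epi _ _ (frechet_alg_sqz bm hB) _ _ (sqz_graph_alg_hom bm hD1)
  (sqz_graph_cont bm hD1) (sqz_graph_alg_hom bm hD2) (sqz_graph_cont bm hD2) agree b.
by move=> /(congr1 snd).
Qed.

(** * Projective tensor products *)

Section TensorStructure.
Variables (B : algType C) (pB : nat -> B -> RR) (T : lmodType C) (t : nat -> T -> RR).
Variables (tens : B -> B -> T) (mu : T -> B) (la : B -> T -> T) (ra : T -> B -> T).

Lemma tensor_frechet : is_proj_tensor pB pB t tens -> is_frechet t.
Proof. by case. Qed.
Lemma tensor_linear1 y : is_proj_tensor pB pB t tens -> is_linear (tens^~ y).
Proof. by case=> _ []. Qed.
Lemma tensor_linear2 x : is_proj_tensor pB pB t tens -> is_linear (tens x).
Proof. by case=> _ []. Qed.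
Lemma tensor_jcont : is_proj_tensor pB pB t tens -> jcont2 pB pB t tens.
Proof. by case. Qed.

Lemma mult_map_linear : is_mult_map pB t tens mu -> is_linear mu. Proof. by case. Qed.
Lemma mult_map_cont : is_mult_map pB t tens mu -> cont_lin t pB mu. Proof. by case. Qed.
Lemma mult_mapE : is_mult_map pB t tens mu -> forall x y, mu (tens x y) = x * y.
Proof. by case. Qed.

Hypothesis hact : tensor_actions t tens la ra.
Lemma tens_lact_linear b : is_linear (la b). Proof. by case: hact => h _ _ _; case: (h b). Qed.
Lemma tens_lact_cont b : cont_lin t t (la b). Proof. by case: hact => h _ _ _; case: (h b). Qed.
Lemma tens_ract_linear b : is_linear (ra^~ b). Proof. by case: hact => _ h _ _; case: (h b). Qed.
Lemma tens_ract_cont b : cont_lin t t (ra^~ b). Proof. by case: hact => _ h _ _; case: (h b). Qed.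
Lemma tens_lactE a x y : la a (tens x y) = tens (a * x) y. Proof. by case: hact. Qed.
Lemma tens_ractE a x y : ra (tens x y) a = tens x (y * a). Proof. by case: hact. Qed.
End TensorStructure.

Lemma mult_map_natural (A B : algType C) (pA : nat -> A -> RR) (pB : nat -> B -> RR)
  (TA TB : lmodType C) (tA : nat -> TA -> RR) (tB : nat -> TB -> RR)
  (tensA : A -> A -> TA) (tensB : B -> B -> TB) (muA : TA -> A) (muB : TB -> B)
  (phi : A -> B) (phiT : TA -> TB) :
  frechet_alg pB -> is_alg_hom phi -> cont_lin pA pB phi ->
  is_proj_tensor pA pA tA tensA -> is_mult_map pA tA tensA muA ->
  is_mult_map pB tB tensB muB -> is_tensor_map tA tB tensA tensB phi phiT ->
  forall x, muB (phiT x) = phi (muA x).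
Proof.
move=> [fB _] [phil phiM _] cphi hTA hmuA hmuB [phiTl phiTc phiTE].
apply: (proj_tensor_ext hTA fB).
- exact: is_linear_comp phiTl (mult_map_linear hmuB).
- exact: cont_lin_comp phiTc (mult_map_cont hmuB).
- exact: is_linear_comp (mult_map_linear hmuA) phil.
- exact: cont_lin_comp (mult_map_cont hmuA) cphi.
- by move=> v w; rewrite phiTE (mult_mapE hmuB) (mult_mapE hmuA) phiM.
Qed.

Section DerivationLift.
Variables (B : algType C) (pB : nat -> B -> RR) (X : lmodType C) (pX : nat -> X -> RR).
Variables (l : B -> X -> X) (r : X -> B -> X) (bm : frechet_bimod pB pX l r).
Variables (D : B -> X) (hD : is_der pB pX id l r D).
Variables (TB : lmodType C) (tB : nat -> TB -> RR) (tensB : B -> B -> TB).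
Variables (muB : TB -> B) (laB : B -> TB -> TB) (raB : TB -> B -> TB).
Hypotheses (hTB : is_proj_tensor pB pB tB tensB) (hmuB : is_mult_map pB tB tensB muB).
Hypothesis hactB : tensor_actions tB tensB laB raB.

Let fX := bimod_frechet bm.
Let snX := frechet_seminorm fX.
Let Dl : is_linear D. Proof. by case: hD. Qed.
Let DM a b : D (a * b) = l a (D b) + r (D a) b. Proof. by case: hD. Qed.

Lemma der_lift_exists :
  exists T : TB -> X, [/\ is_linear T, cont_lin tB pX T & forall x y, T (tensB x y) = l x (D y)].
Proof.
case: hTB => _ _ _ UB.
have bil : is_bilinear (fun x y => l x (D y)).
  by split=> [y|x]; [exact: (lact_linear1 bm) | exact: is_linear_comp Dl (lact_linear2 bm x)].
have jc : jcont2 pB pB pX (fun x y => l x (D y)).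
  by case: hD => _ Dc _; exact: jcont2_compr (lact_jcont bm) (cont_lin_id pB) Dc.
by have [T [[Tl Tc TE] _]] := UB X pX fX _ bil jc; exists T.
Qed.

Variables (T : TB -> X) (Tl : is_linear T) (Tc : cont_lin tB pX T).
Hypothesis TE : forall x y, T (tensB x y) = l x (D y).

Lemma der_lift_lact b x : T (laB b x) = l b (T x).
Proof.
move: x; apply: (proj_tensor_ext hTB fX).
- exact: is_linear_comp (tens_lact_linear hactB b) Tl.
- exact: cont_lin_comp (tens_lact_cont hactB b) Tc.
- exact: is_linear_comp Tl (lact_linear2 bm b).
- exact: cont_lin_comp Tc (jcont2_contr b (lact_jcont bm)).
- by move=> v w; rewrite (tens_lactE hactB) !TE (lactA bm).
Qed.

Lemma der_lift_ract c x : T (raB x c) = r (T x) c + l (muB x) (D c).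
Proof.
move: x; apply: (proj_tensor_ext hTB fX).
- exact: is_linear_comp (tens_ract_linear hactB c) Tl.
- exact: cont_lin_comp (tens_ract_cont hactB c) Tc.
- split => [x y|a x].
    rewrite (is_linearD Tl) (is_linearD (ract_linear1 bm c)).
    by rewrite (is_linearD (mult_map_linear hmuB)) (is_linearD (lact_linear1 bm _)) addrACA.
  rewrite (is_linearZ Tl) (is_linearZ (ract_linear1 bm c)).
  by rewrite (is_linearZ (mult_map_linear hmuB)) (is_linearZ (lact_linear1 bm _)) scalerDr.
- have h1 := cont_lin_comp Tc (jcont2_contl c (ract_jcont bm)).
  have h2 := cont_lin_comp (mult_map_cont hmuB) (jcont2_contl (D c) (lact_jcont bm)).
  exact (cont_linD snX h1 h2).
- move=> v w; rewrite (tens_ractE hactB) !TE (mult_mapE hmuB) DM.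
  by rewrite (is_linearD (lact_linear2 bm v)) (lactA bm) (lractA bm) addrC.
Qed.

Lemma der_lift_diff b : T (tensB 1 b - tensB b 1) = D b.
Proof.
rewrite (is_linearB Tl) !TE (lact1 bm) (der1 bm hD).
by rewrite (is_linear0 (lact_linear2 bm b)) subr0.
Qed.
End DerivationLift.

Lemma cont_lin_vanish_closure (T Q Y : lmodType C) (t : nat -> T -> RR)
  (pY : nat -> Y -> RR) (j : Q -> T) (F : T -> Y) (x : T) :
  is_frechet pY -> is_linear F -> cont_lin t pY F -> (forall y, F (j y) = 0) ->
  (forall m e, 0 < e -> exists y, smax t m (x - j y) < e) -> F x = 0.
Proof.
case=> snY sepY _ Fl /cont_lin_smax Fc Fj xcl; apply: sepY => n.
have [m [c [c0 H]]] := Fc n; apply/eqP; rewrite eq_le sn_ge0 // andbT.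
apply: (le0_mul_eps c0) => e e0; have [y hy] := xcl m e e0.
have -> : F x = F (x - j y) by rewrite (is_linearB Fl) Fj subr0.
apply: le_trans (@le_smax _ pY n n _ (leqnn n)) _; apply: le_trans (H _) _.
by rewrite ler_wpM2l // ltW.
Qed.

(** * Quotients of Fréchet spaces *)

(* The Hausdorff quotient [T / {x | s x = 0}] of a seminormed space: each class
   is represented by a canonical element chosen in it. *)
Section HausdorffQuotient.
Variables (T : lmodType C) (s : nat -> T -> RR) (hs : is_seminorm_family s).

Definition snull (x : T) : Prop := forall n, s n x = 0.

Lemma snull0 : snull 0. Proof. by move=> n; rewrite sn0. Qed.
Lemma snullD x y : snull x -> snull y -> snull (x + y).
Proof.
move=> hx hy n; apply/eqP; rewrite eq_le sn_ge0 // andbT.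
by have := snD hs n x y; rewrite hx hy addr0.
Qed.
Lemma snullZ a x : snull x -> snull (a *: x).
Proof. by move=> hx n; rewrite (snZ hs) hx mulr0. Qed.
Lemma snullN x : snull x -> snull (- x).
Proof. by move=> hx n; rewrite (snN hs). Qed.
Lemma snullB x y : snull x -> snull y -> snull (x - y).
Proof. by move=> hx hy; apply: snullD => //; apply: snullN. Qed.

Lemma snull_sn_eq n x y : snull (x - y) -> s n x = s n y.
Proof.
move=> h; apply/eqP; rewrite eq_le; apply/andP; split.
  by have := sn_le_addB hs n x y; rewrite h addr0.
by have := sn_le_addB hs n y x; rewrite (snBC hs n y x) h addr0.
Qed.

Lemma hrepr_ex x : exists y, `[< snull (x - y) >].
Proof. by exists x; apply/asboolP; rewrite subrr; exact: snull0. Qed.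

Definition hrepr (x : T) : T := xchoose (hrepr_ex x).

Lemma hreprP x : snull (x - hrepr x).
Proof. exact/asboolP/(xchooseP (hrepr_ex x)). Qed.

Lemma hrepr_eq x y : snull (x - y) -> hrepr x = hrepr y.
Proof.
move=> hxy; apply: eq_xchoose => z; apply/asboolP/asboolP => h.
  have -> : y - z = - (x - y) + (x - z) by rewrite opprB addrA subrK.
  by apply: snullD => //; apply: snullN.
have -> : x - z = (x - y) + (y - z) by rewrite addrA subrK.
exact: snullD.
Qed.

Lemma hrepr_idem x : hrepr (hrepr x) = hrepr x.
Proof. by apply: hrepr_eq; rewrite -opprB; apply/snullN/hreprP. Qed.

Definition hquot := {x : T | hrepr x == x}.
HB.instance Definition _ := Choice.on hquot.

Definition hpi (x : T) : hquot := exist _ (hrepr x) (introT eqP (hrepr_idem x)).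

Lemma hpiE x y : snull (x - y) -> hpi x = hpi y.
Proof. by move=> h; apply: val_inj; rewrite /= (hrepr_eq h). Qed.
Lemma hpi_val (u : hquot) : hpi (val u) = u.
Proof. by apply: val_inj; rewrite /= (eqP (valP u)). Qed.
Lemma snull_val_hpi x : snull (val (hpi x) - x).
Proof. by rewrite /= -opprB; apply/snullN/hreprP. Qed.

Definition hq_zero := hpi 0.
Definition hq_add (u v : hquot) := hpi (val u + val v).
Definition hq_opp (u : hquot) := hpi (- val u).
Definition hq_scale (a : C) (u : hquot) := hpi (a *: val u).

Lemma hq_addE x y : hq_add (hpi x) (hpi y) = hpi (x + y).
Proof.
apply: hpiE; rewrite opprD addrACA.
by apply: snullD; apply: snull_val_hpi.
Qed.
Lemma hq_oppE x : hq_opp (hpi x) = hpi (- x).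
Proof. by apply: hpiE; rewrite -opprD; apply/snullN/snull_val_hpi. Qed.
Lemma hq_scaleE a x : hq_scale a (hpi x) = hpi (a *: x).
Proof. by apply: hpiE; rewrite -scalerBr; apply/snullZ/snull_val_hpi. Qed.

Lemma hq_addA : associative hq_add.
Proof. by move=> u v w; rewrite -(hpi_val u) -(hpi_val v) -(hpi_val w) !hq_addE addrA. Qed.
Lemma hq_addC : commutative hq_add.
Proof. by move=> u v; rewrite -(hpi_val u) -(hpi_val v) !hq_addE addrC. Qed.
Lemma hq_add0 : left_id hq_zero hq_add.
Proof. by move=> u; rewrite -(hpi_val u) /hq_zero hq_addE add0r. Qed.
Lemma hq_addN : left_inverse hq_zero hq_opp hq_add.
Proof. by move=> u; rewrite -(hpi_val u) hq_oppE hq_addE addNr. Qed.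
HB.instance Definition _ := GRing.isZmodule.Build hquot hq_addA hq_addC hq_add0 hq_addN.

Lemma hpiD x y : hpi (x + y) = hpi x + hpi y. Proof. by rewrite -hq_addE. Qed.

Lemma hq_scaleA a b u : hq_scale a (hq_scale b u) = hq_scale (a * b) u.
Proof. by rewrite -(hpi_val u) !hq_scaleE scalerA. Qed.
Lemma hq_scale1 : left_id 1 hq_scale.
Proof. by move=> u; rewrite -(hpi_val u) hq_scaleE scale1r. Qed.
Lemma hq_scaleDr : right_distributive hq_scale +%R.
Proof. by move=> a u v; rewrite -(hpi_val u) -(hpi_val v) -hpiD !hq_scaleE scalerDr hpiD. Qed.
Lemma hq_scaleDl v : {morph hq_scale^~ v : a b / a + b}.
Proof. by move=> a b; rewrite -(hpi_val v) !hq_scaleE scalerDl hpiD. Qed.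
HB.instance Definition _ :=
  GRing.Zmodule_isLmodule.Build C hquot hq_scaleA hq_scale1 hq_scaleDr hq_scaleDl.

Lemma hpiZ a x : hpi (a *: x) = a *: hpi x. Proof. by rewrite -hq_scaleE. Qed.
Lemma hpi0 : hpi 0 = 0. Proof. by []. Qed.
Lemma hpi_linear : is_linear hpi. Proof. by split => [x y|a x]; rewrite ?hpiD ?hpiZ. Qed.
Lemma hpi_eq0 x : hpi x = 0 -> snull x.
Proof.
rewrite -hpi0 => /(congr1 val) /= e.
have -> : x = (x - hrepr x) - (0 - hrepr 0) by rewrite e sub0r opprK subrK.
by apply: snullB; apply: hreprP.
Qed.

Definition hquot_sn (n : nat) (u : hquot) : RR := s n (val u).

Lemma hquot_sn_hpi n x : hquot_sn n (hpi x) = s n x.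
Proof. exact: snull_sn_eq (snull_val_hpi x). Qed.

Lemma hquot_snB n u x : hquot_sn n (u - hpi x) = s n (val u - x).
Proof. by rewrite -hquot_sn_hpi hpiD -[hpi (- x)]hq_oppE hpi_val. Qed.

Lemma frechet_hquot : (forall u, cauchy_seq s u -> exists l, converges_to s u l) ->
  is_frechet hquot_sn.
Proof.
move=> sc; split.
- move=> n; split; first by move=> u; apply: (sn_ge0 hs).
  split=> [u v|a u].
    by rewrite -(hpi_val u) -(hpi_val v) -hpiD !hquot_sn_hpi; exact: (snD hs).
  by rewrite -(hpi_val u) -hpiZ !hquot_sn_hpi (snZ hs).
- move=> u h; rewrite -(hpi_val u) -hpi0; apply: hpiE; rewrite subr0 => n.
  exact: h n.
- move=> u hu; have [l hl] : exists l, converges_to s (fun i => val (u i)) l.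
    apply: sc => n e e0; have [N HN] := hu n e e0; exists N => i j iN jN.
    by have := HN i j iN jN; rewrite -{1}(hpi_val (u j)) hquot_snB.
  exists (hpi l) => n e e0; have [N HN] := hl n e e0; exists N => i iN.
  by rewrite hquot_snB; apply: HN.
Qed.

End HausdorffQuotient.

(* [dist_im n x] is the distance, for the seminorm [smax t n], from [x] to the
   image of [j]; these are the seminorms of [T / closure (im j)]. *)
Section DistanceToImage.
Variables (T Q : lmodType C) (t : nat -> T -> RR) (j : Q -> T).
Hypotheses (ht : is_seminorm_family t) (jl : is_linear j).

Definition dist_im (n : nat) (x : T) : RR := inf [set r | exists y, r = smax t n (x - j y)].

Let dist_set_inf n x : has_inf [set r | exists y, r = smax t n (x - j y)].
Proof. by split; [exists (smax t n (x - j 0)); exists 0 | exists 0 => r [y ->]; apply: smax_ge0]. Qed.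

Lemma dist_im_le n x y : dist_im n x <= smax t n (x - j y).
Proof. by apply: (ge_inf (proj2 (dist_set_inf n x))); exists y. Qed.

Lemma dist_im_ge0 n x : 0 <= dist_im n x.
Proof. by apply: (lb_le_inf (proj1 (dist_set_inf n x))) => r [y ->]; apply: smax_ge0. Qed.

Lemma dist_im_approx n x e : 0 < e -> exists y, smax t n (x - j y) < dist_im n x + e.
Proof. by move=> e0; have [r [y ->] h] := inf_adherent e0 (dist_set_inf n x); exists y. Qed.

Lemma dist_im_homo n n' x : (n <= n')%N -> dist_im n x <= dist_im n' x.
Proof.
move=> nn; apply: (lb_le_inf (proj1 (dist_set_inf n' x))) => r [y ->].
exact: le_trans (dist_im_le n x y) (smax_homo _ _ nn).
Qed.

Lemma dist_im_le_smax n x : dist_im n x <= smax t n x.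
Proof. by have := dist_im_le n x 0; rewrite (is_linear0 jl) subr0. Qed.

Lemma dist_im_image n y : dist_im n (j y) = 0.
Proof.
apply/eqP; rewrite eq_le dist_im_ge0 andbT; apply: le_trans (dist_im_le n _ y) _.
by rewrite subrr (sn0 (seminorm_family_smax ht)).
Qed.

Lemma seminorm_family_dist_im : is_seminorm_family dist_im.
Proof.
have st := seminorm_family_smax ht.
move=> n; split; first exact: dist_im_ge0.
split.
  move=> x x'; apply/ler_addgt0Pr => e e0.
  have e20 : 0 < e / 2 by rewrite divr_gt0.
  have [y hy] := dist_im_approx n x e20; have [y' hy'] := dist_im_approx n x' e20.
  apply: le_trans (dist_im_le n (x + x') (y + y')) _.
  rewrite (is_linearD jl) opprD addrACA; apply: le_trans (snD st _ _ _) _.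
  have : e / 2 + e / 2 = e by rewrite -splitr.
  lra.
apply: normc_homogeneous; first exact: dist_im_ge0.
move=> a x; have na0 := normc_ge0 a.
rewrite -subr_le0; apply: (le0_mul_eps na0) => e e0.
have [y hy] := dist_im_approx n x e0.
have := dist_im_le n (a *: x) (a *: y).
rewrite (is_linearZ jl) -scalerBr (snZ st) => h.
have : normc a * smax t n (x - j y) <= normc a * (dist_im n x + e) by rewrite ler_wpM2l // ltW.
by rewrite mulrDr; lra.
Qed.

Lemma dist_im_map (F : T -> T) n m (K : RR) :
  is_linear F -> (forall y, exists y', F (j y) = j y') ->
  0 <= K -> (forall w, smax t n (F w) <= K * smax t m w) ->
  forall z, dist_im n (F z) <= K * dist_im m z.
Proof.
move=> Fl Fj K0 HK z; rewrite -subr_le0; apply: (le0_mul_eps K0) => e e0.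
have [y hy] := dist_im_approx m z e0; have [y' hy'] := Fj y.
have := dist_im_le n (F z) y'; rewrite -hy' -(is_linearB Fl) => h1.
have h2 : K * smax t m (z - j y) <= K * (dist_im m z + e) by rewrite ler_wpM2l // ltW.
by have := HK (z - j y); rewrite mulrDr in h2 *; lra.
Qed.
End DistanceToImage.

Definition halfpow (k : nat) : RR := 2^-1 ^+ k.

Lemma halfpow_gt0 k : 0 < halfpow k. Proof. by rewrite exprn_gt0 // invr_gt0. Qed.
Lemma halfpowS k : halfpow k.+1 = halfpow k / 2. Proof. by rewrite /halfpow exprSr. Qed.

Lemma halfpow_le k k' : (k <= k')%N -> halfpow k' <= halfpow k.
Proof. by move=> kk; apply: ler_wiXn2l => //; rewrite ?invr_ge0 ?invf_le1 ?ler1n ?ltr0n. Qed.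

Lemma halfpow_small e : 0 < e -> exists K, halfpow K < e.
Proof.
move=> e0; have [k hk] := ltr_add_invr e0; exists k; rewrite add0r in hk.
apply: le_lt_trans hk; rewrite /halfpow exprVn -natrX.
have p1 : (k.+1%:R : RR) \in Num.pos by rewrite posrE ltr0n.
have p2 : ((2 ^ k)%:R : RR) \in Num.pos by rewrite posrE ltr0n expn_gt0.
by rewrite (lef_pV2 p2 p1) ler_nat; apply: ltn_expl.
Qed.

Section Sequences.
Variables (T : lmodType C) (t : nat -> T -> RR) (ht : is_seminorm_family t).

Lemma converges_smax (u : nat -> T) l : converges_to t u l ->
  forall n e, 0 < e -> exists N, forall K, (N <= K)%N -> smax t n (u K - l) < e.
Proof.
move=> hl n e e0; have e20 : 0 < e / 2 by rewrite divr_gt0.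
have [N HN] : exists N, forall K, (N <= K)%N -> forall k, (k <= n)%N -> t k (u K - l) < e / 2.
  elim: n => [|n [N ih]].
    have [N hN] := hl 0%N _ e20; exists N => K KN k; rewrite leqn0 => /eqP ->; exact: hN.
  have [N' hN'] := hl n.+1 _ e20; exists (maxn N N') => K KN k.
  rewrite leq_eqVlt => /orP[/eqP ->|]; first by apply: hN'; rewrite geq_max in KN; case/andP: KN.
  by rewrite ltnS; apply: ih; rewrite geq_max in KN; case/andP: KN.
exists N => K KN; apply: le_lt_trans (_ : e / 2 < e); last by rewrite ltr_pdivrMr // ltr_pMr // ltr1n.
by apply: smax_lub; [exact: ltW | move=> k kn; exact/ltW/HN].
Qed.

Lemma halfpow_cauchy (v : nat -> T) :
  (forall j K, (j <= K)%N -> t j (v K.+1 - v K) < halfpow K) -> cauchy_seq t v.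
Proof.
move=> hv.
have tail j K K' : (j <= K)%N -> (K <= K')%N -> t j (v K' - v K) <= 2 * halfpow K - 2 * halfpow K'.
  move=> jK; elim: K' => [|K' ih]; first by rewrite leqn0 => /eqP ->; rewrite !subrr sn0.
  rewrite leq_eqVlt => /orP[/eqP <-|]; first by rewrite !subrr sn0.
  rewrite ltnS => KK'; have := ih KK'; have := hv j K' (leq_trans jK KK').
  by have := snB_trans ht j (v K'.+1) (v K') (v K); rewrite halfpowS; lra.
move=> j e e0; have e40 : 0 < e / 4 by rewrite divr_gt0.
have [K0 hK0] := halfpow_small e40.
exists (maxn j K0) => i i' hi hi'; set K := maxn j K0.
have jK : (j <= K)%N by rewrite leq_maxl.
have gK : halfpow K <= halfpow K0 by apply: halfpow_le; rewrite leq_maxr.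
have := snB_trans ht j (v i) (v K) (v i'); rewrite (snBC ht j (v K)).
have := tail j K i jK hi; have := tail j K i' jK hi'.
have := halfpow_gt0 i; have := halfpow_gt0 i'.
have : e / 4 * 4 = e by rewrite divfK // pnatr_eq0.
lra.
Qed.

Lemma cauchy_halfpow_indices (u : nat -> T) : cauchy_seq t u ->
  exists nn : nat -> nat, (forall k, (nn k <= nn k.+1)%N) /\
    forall k i i', (nn k <= i)%N -> (nn k <= i')%N -> t k (u i - u i') < halfpow k.
Proof.
move=> hu; have [N HN] := choice (fun k => hu k _ (halfpow_gt0 k)).
pose nn := fix nn k := if k is k'.+1 then maxn (nn k') (N k) else N 0%N.
have nnN k : (N k <= nn k)%N by case: k => //= k; rewrite leq_maxr.
exists nn; split=> [k|k i i' hi hi']; first by rewrite /= leq_maxl.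
by apply: HN; [apply: leq_trans (nnN k) hi | apply: leq_trans (nnN k) hi'].
Qed.
End Sequences.

Lemma dist_im_complete (T Q : lmodType C) (t : nat -> T -> RR) (j : Q -> T) :
  is_frechet t -> is_linear j ->
  forall u, cauchy_seq (dist_im t j) u -> exists l, converges_to (dist_im t j) u l.
Proof.
case=> ht _ tc jl u hu; have dj := seminorm_family_dist_im ht jl.
have [nn [nnS Hnn]] := cauchy_halfpow_indices hu.
pose d k := u (nn k.+1) - u (nn k).
have exy k : exists y, smax t k (d k - j y) < halfpow k.
  have e0 : 0 < halfpow k - dist_im t j k (d k) by rewrite subr_gt0; exact: Hnn.
  have [y hy] := dist_im_approx t j k (d k) e0.
  by exists y; rewrite addrCA subrr addr0 in hy.
have [y Hy] := choice exy.
pose S K := \sum_(k < K) y k.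
pose v K := u (nn K) - j (S K).
have vS K : v K.+1 - v K = d K - j (y K).
  rewrite /v /S big_ord_recr /= (is_linearD jl).
  by rewrite opprD addrA (addrAC (u _)) opprB addrA subrK addrAC.
have [l hl] : exists l, converges_to t v l.
  apply/tc/halfpow_cauchy => // i K iK; rewrite vS.
  exact: le_lt_trans (le_smax _ _ iK) (Hy K).
exists l => i e e0; have e20 : 0 < e / 2 by rewrite divr_gt0.
have [K1 hK1] := halfpow_small e20; have [K2 hK2] := converges_smax hl i e20.
set K := maxn i (maxn K1 K2).
have [iK K1K K2K] : [/\ (i <= K)%N, (K1 <= K)%N & (K2 <= K)%N].
  by rewrite !leq_max !leqnn !orbT.
exists (nn K) => i' iK'.
have h1 : dist_im t j i (u i' - u (nn K)) < halfpow K.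
  exact: le_lt_trans (dist_im_homo t j _ iK) (Hnn K _ _ iK' (leqnn _)).
have h2 : dist_im t j i (u (nn K) - l) <= smax t i (v K - l).
  by apply: le_trans (dist_im_le t j _ _ (S K)) _; rewrite /v addrAC.
have := hK2 K K2K; have := halfpow_le K1K.
have := snD dj i (u i' - u (nn K)) (u (nn K) - l); rewrite addrA subrK.
have : e / 2 + e / 2 = e by rewrite -splitr.
lra.
Qed.

(** * The Fréchet bimodule B ^(x) B *)

(* The [x] with finite operator seminorms [act_norm k x] form a Fréchet space
   receiving the elementary tensors continuously; by the universal property it
   is all of [B ^(x) B], with a continuous inclusion, and this is the joint
   continuity of the action [al]. *)
Section TensorAction.
Variables (B : algType C) (pB : nat -> B -> RR) (T : lmodType C) (t : nat -> T -> RR).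
Variables (tens : B -> B -> T) (al : B -> T -> T) (M : nat -> nat).
Hypothesis hT : is_proj_tensor pB pB t tens.
Hypotheses (al_lin : forall b, is_linear (al b)) (al_cont : forall b, cont_lin t t (al b)).
Hypothesis alM : forall k, exists c, forall b x y,
  t k (al b (tens x y)) <= c * smax pB (M k) b * smax pB (M k) x * smax pB (M k) y.

Let fT := tensor_frechet hT.
Let ht := frechet_seminorm fT.

Definition act_bound k x (c : RR) := 0 <= c /\ forall b, t k (al b x) <= c * smax pB (M k) b.
Definition act_bounded x := forall k, exists c, act_bound k x c.
Definition act_norm k x := inf [set c | act_bound k x c].

Lemma act_bound_max k x c :
  (forall b, t k (al b x) <= c * smax pB (M k) b) -> act_bound k x (Num.max c 0).
Proof.
move=> h; split=> [|b]; first by rewrite le_max lexx orbT.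
by apply: le_trans (h b) _; rewrite ler_wpM2r ?smax_ge0 // le_max lexx.
Qed.

Lemma act_norm_le k x c : act_bound k x c -> act_norm k x <= c.
Proof. by move=> hc; apply: (ge_inf (E := [set c | act_bound k x c])) => //; exists 0 => c' []. Qed.

Section Bounded.
Variables (x : T) (hx : act_bounded x).

Let act_bound_inf k : has_inf [set c | act_bound k x c].
Proof. by split; [have [c hc] := hx k; exists c | exists 0 => c' []]. Qed.

Lemma act_norm_ge0 k : 0 <= act_norm k x.
Proof. by apply: lb_le_inf (proj1 (act_bound_inf k)) _ => c []. Qed.

Lemma act_norm_bound k : act_bound k x (act_norm k x).
Proof.
split=> [|b]; first exact: act_norm_ge0.
apply: le_mul_eps; first exact: smax_ge0.
move=> e e0; have [c [c0 hc] ce] := inf_adherent e0 (act_bound_inf k).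
by apply: le_trans (hc b) _; rewrite ler_wpM2r ?smax_ge0 // ltW.
Qed.
End Bounded.

Lemma act_bound0 k : act_bound k 0 0.
Proof. by split => // b; rewrite (is_linear0 (al_lin b)) sn0 // mul0r. Qed.
Lemma act_boundD k x y c c' :
  act_bound k x c -> act_bound k y c' -> act_bound k (x + y) (c + c').
Proof.
move=> [c0 h] [c'0 h']; split=> [|b]; first by rewrite addr_ge0.
by rewrite (is_linearD (al_lin b)) mulrDl; apply: le_trans (snD ht _ _ _) _; apply: lerD.
Qed.
Lemma act_boundZ k a x c : act_bound k x c -> act_bound k (a *: x) (normc a * c).
Proof.
move=> [c0 h]; split=> [|b]; first by rewrite mulr_ge0 ?normc_ge0.
by rewrite (is_linearZ (al_lin b)) (snZ ht) -mulrA ler_wpM2l ?normc_ge0.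
Qed.

Lemma act_bounded0 : act_bounded 0. Proof. by move=> k; exists 0; exact: act_bound0. Qed.
Lemma act_boundedD x y : act_bounded x -> act_bounded y -> act_bounded (x + y).
Proof.
move=> hx hy k; have [c hc] := hx k; have [c' hc'] := hy k.
by exists (c + c'); exact: act_boundD.
Qed.
Lemma act_boundedZ a x : act_bounded x -> act_bounded (a *: x).
Proof. by move=> hx k; have [c hc] := hx k; exists (normc a * c); exact: act_boundZ. Qed.
Lemma act_boundedN x : act_bounded x -> act_bounded (- x).
Proof. by move=> hx; rewrite -scaleN1r; exact: act_boundedZ. Qed.

Lemma act_normD k x y : act_bounded x -> act_bounded y ->
  act_norm k (x + y) <= act_norm k x + act_norm k y.
Proof. by move=> hx hy; apply/act_norm_le/act_boundD; apply: act_norm_bound. Qed.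

Lemma act_normZ k a x : act_bounded x -> act_norm k (a *: x) <= normc a * act_norm k x.
Proof. by move=> hx; apply/act_norm_le/act_boundZ/act_norm_bound. Qed.

Lemma act_bounded_tens x y : act_bounded (tens x y).
Proof.
move=> k; have [c hc] := alM k.
exists (Num.max (c * smax pB (M k) x * smax pB (M k) y) 0); apply: act_bound_max => b.
by apply: le_trans (hc b x y) _; rewrite -!mulrA [smax pB _ b * _]mulrC -mulrA.
Qed.

Definition act_bdd := {x : T | `[< act_bounded x >]}.
HB.instance Definition _ := Choice.on act_bdd.

Lemma act_bddP (u : act_bdd) : act_bounded (val u). Proof. exact/asboolP/(valP u). Qed.
Definition act_bdd_mk x (h : act_bounded x) : act_bdd := exist _ x (asboolT h).

Definition ab_zero := act_bdd_mk act_bounded0.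
Definition ab_add (u v : act_bdd) := act_bdd_mk (act_boundedD (act_bddP u) (act_bddP v)).
Definition ab_opp (u : act_bdd) := act_bdd_mk (act_boundedN (act_bddP u)).
Definition ab_scale a (u : act_bdd) := act_bdd_mk (act_boundedZ a (act_bddP u)).

Lemma ab_addA : associative ab_add. Proof. by move=> u v w; apply: val_inj; rewrite /= addrA. Qed.
Lemma ab_addC : commutative ab_add. Proof. by move=> u v; apply: val_inj; rewrite /= addrC. Qed.
Lemma ab_add0 : left_id ab_zero ab_add. Proof. by move=> u; apply: val_inj; rewrite /= add0r. Qed.
Lemma ab_addN : left_inverse ab_zero ab_opp ab_add.
Proof. by move=> u; apply: val_inj; rewrite /= addNr. Qed.
HB.instance Definition _ := GRing.isZmodule.Build act_bdd ab_addA ab_addC ab_add0 ab_addN.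

Lemma ab_scaleA a b u : ab_scale a (ab_scale b u) = ab_scale (a * b) u.
Proof. by apply: val_inj; rewrite /= scalerA. Qed.
Lemma ab_scale1 : left_id 1 ab_scale. Proof. by move=> u; apply: val_inj; rewrite /= scale1r. Qed.
Lemma ab_scaleDr : right_distributive ab_scale +%R.
Proof. by move=> a u v; apply: val_inj; rewrite /= scalerDr. Qed.
Lemma ab_scaleDl v : {morph ab_scale^~ v : a b / a + b}.
Proof. by move=> a b; apply: val_inj; rewrite /= scalerDl. Qed.
HB.instance Definition _ :=
  GRing.Zmodule_isLmodule.Build C act_bdd ab_scaleA ab_scale1 ab_scaleDr ab_scaleDl.

Lemma val_abB (u v : act_bdd) : val (u - v) = val u - val v. Proof. by []. Qed.

Definition act_sn k (u : act_bdd) := t k (val u) + act_norm k (val u).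

Lemma t_le_act_sn k u : t k (val u) <= act_sn k u.
Proof. by rewrite /act_sn lerDl; exact: act_norm_ge0 (act_bddP u) k. Qed.
Lemma act_norm_le_act_sn k u : act_norm k (val u) <= act_sn k u.
Proof. by rewrite /act_sn lerDr (sn_ge0 ht). Qed.

Lemma seminorm_family_act_sn : is_seminorm_family act_sn.
Proof.
move=> k; split=> [u|]; first by rewrite addr_ge0 ?(sn_ge0 ht) ?(act_norm_ge0 (act_bddP u)).
split=> [u v|].
  rewrite /act_sn /=; have := snD ht k (val u) (val v).
  by have := act_normD k (act_bddP u) (act_bddP v); lra.
apply: normc_homogeneous => [u|a u].
  by rewrite addr_ge0 ?(sn_ge0 ht) ?(act_norm_ge0 (act_bddP u)).
rewrite /act_sn /= (snZ ht) mulrDr lerD //; exact: act_normZ (act_bddP u).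
Qed.

Lemma converges_act_norm (u : nat -> act_bdd) l :
  cauchy_seq act_sn u -> converges_to t (fun i => val (u i)) l ->
  forall k e, 0 < e -> exists N, forall i, (N <= i)%N -> act_bound k (val (u i) - l) e.
Proof.
move=> hu hl k e e0; have [N HN] := hu k e e0; exists N => i iN.
split=> [|b]; first exact: ltW.
apply/ler_addgt0Pr => eps eps0.
have [m [c [c0 Hc]]] := cont_lin_smax (al_cont b) k.
have c10 : 0 < c + 1 by rewrite ltr_wpDl.
have [N' HN'] := converges_smax hl m (divr_gt0 eps0 c10).
set j := maxn N N'.
have -> : val (u i) - l = (val (u i) - val (u j)) + (val (u j) - l) by rewrite addrA subrK.
rewrite (is_linearD (al_lin b)); apply: le_trans (snD ht _ _ _) _; apply: lerD.
  rewrite -val_abB; apply: le_trans (proj2 (act_norm_bound (act_bddP _) k) b) _.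
  rewrite ler_wpM2r ?smax_ge0 //; apply/ltW; apply: le_lt_trans (act_norm_le_act_sn _ _) _.
  by apply: HN; rewrite ?leq_maxl.
apply: le_trans (@le_smax _ t k k _ (leqnn k)) _; apply: le_trans (Hc _) _.
apply: le_trans (ler_wpM2l c0 (ltW (HN' j (leq_maxr _ _)))) _.
rewrite mulrCA ger_pMr ?divr_gt0 // ler_pdivrMr // mul1r lerDl //.
Qed.

Lemma act_sn_complete u : cauchy_seq act_sn u -> exists l, converges_to act_sn u l.
Proof.
move=> hu; case: fT => _ _ tc.
have [l hl] : exists l, converges_to t (fun i => val (u i)) l.
  apply: tc => k e e0; have [N HN] := hu k e e0; exists N => i j iN jN.
  by apply: le_lt_trans (HN i j iN jN); rewrite -val_abB t_le_act_sn.
have Hb := converges_act_norm hu hl.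
have bl : act_bounded l.
  move=> k; have [N HN] := Hb k 1 ltr01.
  have -> : l = val (u N) - (val (u N) - l) by rewrite opprB addrC subrK.
  exists (act_norm k (val (u N)) + normc (-1) * 1); rewrite -scaleN1r.
  by apply: act_boundD; [exact: (act_norm_bound (act_bddP (u N)) k) | exact/act_boundZ/HN].
exists (act_bdd_mk bl) => k e e0; have e20 : 0 < e / 2 by rewrite divr_gt0.
have [N1 H1] := Hb k _ e20; have [N2 H2] := hl k _ e20.
exists (maxn N1 N2) => i iN; rewrite /act_sn val_abB /=.
have := act_norm_le (H1 i (leq_trans (leq_maxl _ _) iN)).
have := H2 i (leq_trans (leq_maxr _ _) iN).
have : e / 2 + e / 2 = e by rewrite -splitr.
lra.
Qed.

Lemma frechet_act_sn : is_frechet act_sn.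
Proof.
split; [exact: seminorm_family_act_sn | | exact: act_sn_complete].
move=> u h; apply: val_inj; case: fT => _ sep _; apply: sep => k.
by apply/eqP; rewrite eq_le (sn_ge0 ht) andbT -(h k) t_le_act_sn.
Qed.

Definition act_tens x y : act_bdd := act_bdd_mk (act_bounded_tens x y).

Lemma act_tens_jcont : jcont2 pB pB act_sn act_tens.
Proof.
move=> k; have [m1 [c1 [c10 H1]]] := jcont2_smax (tensor_jcont hT) k; have [c hc] := alM k.
set M' := maxn m1 (M k); exists M', (c1 + Num.max c 0) => x y.
have [sx sy] : smax pB (M k) x <= smax pB M' x /\ smax pB (M k) y <= smax pB M' y.
  by split; apply: smax_homo; rewrite leq_maxr.
rewrite /act_sn /= !mulrDl; apply: lerD.
  apply: le_trans (@le_smax _ t k k _ (leqnn k)) _; apply: le_trans (H1 x y) _.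
  by apply: ler_coefM3 => //; try exact: smax_ge0; apply: smax_homo; rewrite leq_maxl.
apply: le_trans (act_norm_le (act_bound_max (c := c * smax pB (M k) x * smax pB (M k) y) _)) _.
  by move=> b; apply: le_trans (hc b x y) _; rewrite -!mulrA [smax pB _ b * _]mulrC -mulrA.
rewrite ge_max; apply/andP; split; last by rewrite !mulr_ge0 ?smax_ge0 ?le_max ?lexx ?orbT.
by apply: ler_coefM3; rewrite ?smax_ge0 ?le_max ?lexx ?orbT.
Qed.

Lemma jcont2_tensor_action : jcont2 pB t t al.
Proof.
have fb : is_bilinear act_tens.
  split=> [y|x]; split=> [x1 x2|a x1]; apply: val_inj => /=.
  - exact: is_linearD (tensor_linear1 y hT) _ _.
  - exact: is_linearZ (tensor_linear1 y hT) _ _.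
  - exact: is_linearD (tensor_linear2 x hT) _ _.
  - exact: is_linearZ (tensor_linear2 x hT) _ _.
case: (hT) => _ _ _ /(_ _ _ frechet_act_sn _ fb act_tens_jcont) [g [[gl gc gE] _]].
have val_g x : val (g x) = x.
  move: x; apply: (proj_tensor_ext hT fT) => [| | | |v w]; last by rewrite gE.
  - by split=> [x y|a x]; rewrite ?(is_linearD gl) ?(is_linearZ gl).
  - apply: cont_lin_comp gc _ => k; exists k, 1 => u; rewrite mul1r.
    exact: le_trans (t_le_act_sn k u) (le_smax _ _ (leqnn k)).
  - exact: is_linear_id.
  - exact: cont_lin_id.
move=> k; have [m [c [c0 H]]] := cont_lin_smax gc k.
exists (maxn (M k) m), c => b x; rewrite -{1}(val_g x).
apply: le_trans (proj2 (act_norm_bound (act_bddP (g x)) k) b) _.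
have hg : act_norm k (val (g x)) <= c * smax t m x.
  exact: le_trans (act_norm_le_act_sn _ _) (le_trans (le_smax _ _ (leqnn k)) (H x)).
rewrite mulrAC; apply: ler_pM; rewrite ?smax_ge0 ?(act_norm_ge0 (act_bddP _)) //.
  by apply: le_trans hg _; rewrite ler_wpM2l // smax_homo // leq_maxr.
by rewrite smax_homo // leq_maxl.
Qed.
End TensorAction.

Lemma tensor_mul_bound (B : algType C) (pB : nat -> B -> RR) (T : lmodType C)
  (t : nat -> T -> RR) (f : B -> B -> T) :
  jcont2 pB pB t f -> jcont2 pB pB pB (fun x y : B => x * y) ->
  (forall k, exists m c, forall b x y,
     t k (f (b * x) y) <= c * smax pB m b * smax pB m x * smax pB m y) /\
  (forall k, exists m c, forall b x y,
     t k (f x (y * b)) <= c * smax pB m b * smax pB m x * smax pB m y).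
Proof.
move=> /jcont2_smax hf /jcont2_smax hm; split=> k.
all: have [m [c [c0 H]]] := hf k; have [m' [c' [c'0 H']]] := hm m.
all: set M := maxn m m'; exists M, (c * c') => b x y.
all: apply: le_trans (@le_smax _ t k k _ (leqnn k)) _; apply: le_trans (H _ _) _.
all: have [sm sm'] : (forall z, smax pB m z <= smax pB M z) /\ (forall z, smax pB m' z <= smax pB M z).
all: try by split=> z; apply: smax_homo; rewrite ?leq_maxl ?leq_maxr.
- rewrite (_ : _ * _ * _ * _ * _ = c * (c' * smax pB M b * smax pB M x) * smax pB M y); last by ring.
  apply: ler_coefM3; rewrite ?smax_ge0 ?sm //.
  by apply: le_trans (H' b x) _; apply: ler_coefM3; rewrite ?smax_ge0 ?sm'.
- rewrite (_ : _ * _ * _ * _ * _ = c * smax pB M x * (c' * smax pB M y * smax pB M b)); last by ring.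
  apply: ler_coefM3; rewrite ?smax_ge0 ?sm //.
  by apply: le_trans (H' y b) _; apply: ler_coefM3; rewrite ?smax_ge0 ?sm'.
Qed.

Section TensorBimodule.
Variables (B : algType C) (pB : nat -> B -> RR) (TB : lmodType C) (tB : nat -> TB -> RR).
Variables (tensB : B -> B -> TB) (laB : B -> TB -> TB) (raB : TB -> B -> TB).
Hypotheses (hB : frechet_alg pB) (hTB : is_proj_tensor pB pB tB tensB).
Hypothesis hactB : tensor_actions tB tensB laB raB.

Let fTB := tensor_frechet hTB.
Let snTB := frechet_seminorm fTB.
Let laBl := tens_lact_linear hactB.
Let laBc := tens_lact_cont hactB.
Let raBl := tens_ract_linear hactB.
Let raBc := tens_ract_cont hactB.
Let laBE := tens_lactE hactB.
Let raBE := tens_ractE hactB.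

Ltac tensor_ext := apply: (proj_tensor_ext hTB fTB).

Lemma tens_lact1 x : laB 1 x = x.
Proof.
move: x; tensor_ext; [exact: laBl | exact: laBc | exact: is_linear_id | exact: cont_lin_id |].
by move=> v w; rewrite laBE mul1r.
Qed.
Lemma tens_ract1 x : raB x 1 = x.
Proof.
move: x; tensor_ext; [exact: raBl | exact: raBc | exact: is_linear_id | exact: cont_lin_id |].
by move=> v w; rewrite raBE mulr1.
Qed.
Lemma tens_lactA a b x : laB (a * b) x = laB a (laB b x).
Proof.
move: x; tensor_ext; [exact: laBl | exact: laBc | exact: is_linear_comp (laBl b) (laBl a) |
  exact: cont_lin_comp (laBc b) (laBc a) |].
by move=> v w; rewrite !laBE mulrA.
Qed.
Lemma tens_ractA a b x : raB x (a * b) = raB (raB x a) b.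
Proof.
move: x; tensor_ext; [exact: raBl | exact: raBc | exact: is_linear_comp (raBl a) (raBl b) |
  exact: cont_lin_comp (raBc a) (raBc b) |].
by move=> v w; rewrite !raBE mulrA.
Qed.
Lemma tens_lractA a b x : raB (laB a x) b = laB a (raB x b).
Proof.
move: x; tensor_ext; [exact: is_linear_comp (laBl a) (raBl b) | exact: cont_lin_comp (laBc a) (raBc b) |
  exact: is_linear_comp (raBl b) (laBl a) | exact: cont_lin_comp (raBc b) (laBc a) |].
by move=> v w; rewrite laBE !raBE laBE.
Qed.

Lemma tens_lact_linear1 x : is_linear (laB^~ x).
Proof.
split=> [a a'|c a]; move: x; tensor_ext; try exact: laBl; try exact: laBc.
- exact: is_linearD_fun (laBl a) (laBl a').
- exact (cont_linD snTB (laBc a) (laBc a')).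
- by move=> v w; rewrite !laBE mulrDl (is_linearD (tensor_linear1 w hTB)).
- exact: is_linearZ_fun (laBl a).
- exact (cont_linZ _ snTB (laBc a)).
- by move=> v w; rewrite !laBE -scalerAl (is_linearZ (tensor_linear1 w hTB)).
Qed.

Lemma tens_ract_linear2 x : is_linear (raB x).
Proof.
split=> [a a'|c a]; move: x; tensor_ext; try exact: raBl; try exact: raBc.
- exact: is_linearD_fun (raBl a) (raBl a').
- exact (cont_linD snTB (raBc a) (raBc a')).
- by move=> v w; rewrite !raBE mulrDr (is_linearD (tensor_linear2 v hTB)).
- exact: is_linearZ_fun (raBl a).
- exact (cont_linZ _ snTB (raBc a)).
- by move=> v w; rewrite !raBE -scalerAr (is_linearZ (tensor_linear2 v hTB)).
Qed.

Lemma jcont2_tens_lact : jcont2 pB tB tB laB.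
Proof.
have [M hM] := choice (tensor_mul_bound (tensor_jcont hTB) (proj2 hB)).1.
apply: (jcont2_tensor_action (M := M) hTB laBl laBc) => k.
by have [c hc] := hM k; exists c => b x y; rewrite laBE; exact: hc.
Qed.

Lemma jcont2_tens_ract : jcont2 pB tB tB (fun b x => raB x b).
Proof.
have [M hM] := choice (tensor_mul_bound (tensor_jcont hTB) (proj2 hB)).2.
apply: (jcont2_tensor_action (M := M) hTB raBl raBc) => k.
by have [c hc] := hM k; exists c => b x y; rewrite raBE; exact: hc.
Qed.

Lemma frechet_bimod_tensor : frechet_bimod pB tB laB raB.
Proof.
split=> //.
- by split; [split; [exact: tens_lact_linear1 | exact: laBl] | exact: jcont2_tens_lact].
- split; [split; [exact: raBl | exact: tens_ract_linear2] |].
  move=> k; have [m [c H]] := jcont2_tens_ract k.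
  by exists m, c => x b; rewrite mulrAC; exact: H.
- by split=> *; [exact: tens_lactA | exact: tens_ractA | exact: tens_lractA].
- by split; [exact: tens_lact1 | exact: tens_ract1].
Qed.
Definition univ_der (b : B) : TB := tensB 1 b - tensB b 1.

Lemma is_der_univ_der : is_der pB tB id laB raB univ_der.
Proof.
split.
- exact: is_linearB_fun (tensor_linear2 1 hTB) (tensor_linear1 1 hTB).
- exact (cont_linB (frechet_seminorm fTB)
    (jcont2_contr 1 (tensor_jcont hTB)) (jcont2_contl 1 (tensor_jcont hTB))).
- move=> a b; rewrite /univ_der (is_linearB (tens_lact_linear hactB a)).
  rewrite (is_linearB (tens_ract_linear hactB b)) !(tens_lactE hactB) !(tens_ractE hactB).
  by rewrite mulr1 mul1r [RHS]addrC addrA subrK.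
Qed.
End TensorBimodule.

(* For a Fréchet bimodule [Y] and a sub-bimodule [im j], the Hausdorff quotient
   of [Y] by [dist_im] is the Fréchet bimodule [Y / closure (im j)]. *)
Section QuotientBimodule.
Variables (B : algType C) (pB : nat -> B -> RR) (Y : lmodType C) (pY : nat -> Y -> RR).
Variables (l : B -> Y -> Y) (r : Y -> B -> Y) (Q : lmodType C) (j : Q -> Y).
Hypotheses (bm : frechet_bimod pB pY l r) (jl : is_linear j).
Hypothesis lj : forall b y, exists y', l b (j y) = j y'.
Hypothesis rj : forall b y, exists y', r (j y) b = j y'.

Let fY := bimod_frechet bm.
Let snY := frechet_seminorm fY.
Let dj := seminorm_family_dist_im snY jl.
Local Notation X := (hquot dj).
Local Notation pi := (hpi dj).
Local Notation qsn := (@hquot_sn _ _ dj).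

Lemma dist_im_lact n : exists m c, 0 <= c /\
  forall b z, dist_im pY j n (l b z) <= c * smax pB m b * dist_im pY j m z.
Proof.
have [m [c [c0 H]]] := jcont2_smax (lact_jcont bm) n; exists m, c; split=> // b z.
apply: (dist_im_map (lact_linear2 bm b) (lj b)); last exact: H.
by rewrite mulr_ge0 ?smax_ge0.
Qed.

Lemma dist_im_ract n : exists m c, 0 <= c /\
  forall b z, dist_im pY j n (r z b) <= c * smax pB m b * dist_im pY j m z.
Proof.
have [m [c [c0 H]]] := jcont2_smax (ract_jcont bm) n; exists m, c; split=> // b z.
apply: (dist_im_map (F := r^~ b) (ract_linear1 bm b) (rj b)); first by rewrite mulr_ge0 ?smax_ge0.
by move=> w; rewrite mulrAC; exact: H.
Qed.

Definition qlact b (u : X) : X := pi (l b (val u)).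
Definition qract (u : X) b : X := pi (r (val u) b).

Lemma qlact_hpi b x : qlact b (pi x) = pi (l b x).
Proof.
apply: hpiE; rewrite -(is_linearB (lact_linear2 bm b)) => n.
have [m [c [c0 H]]] := dist_im_lact n.
apply/eqP; rewrite eq_le dist_im_ge0 andbT; apply: le_trans (H _ _) _.
by rewrite (snull_val_hpi dj x m) mulr0.
Qed.

Lemma qract_hpi b x : qract (pi x) b = pi (r x b).
Proof.
apply: hpiE; rewrite -(is_linearB (ract_linear1 bm b)) => n.
have [m [c [c0 H]]] := dist_im_ract n.
apply/eqP; rewrite eq_le dist_im_ge0 andbT; apply: le_trans (H _ _) _.
by rewrite (snull_val_hpi dj x m) mulr0.
Qed.

Lemma hpi_cont_quot : cont_lin pY qsn pi.
Proof. by move=> n; exists n, 1 => x; rewrite hquot_sn_hpi mul1r dist_im_le_smax. Qed.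

Lemma hpi_image y : pi (j y) = 0.
Proof. by rewrite -(hpi0 dj); apply: hpiE; rewrite subr0 => n; exact: dist_im_image. Qed.

Lemma frechet_bimod_quot : frechet_bimod pB qsn qlact qract.
Proof.
split.
- exact: frechet_hquot (dist_im_complete fY jl).
- split; first split.
  + move=> v; split=> [a a'|c a]; rewrite /qlact.
      by rewrite (is_linearD (lact_linear1 bm _)) (hpiD dj).
    by rewrite (is_linearZ (lact_linear1 bm _)) (hpiZ dj).
  + move=> b; split=> [u v|c u]; rewrite -(hpi_val u) ?(-(hpi_val v)).
      by rewrite -(hpiD dj) !qlact_hpi (is_linearD (lact_linear2 bm b)) (hpiD dj).
    by rewrite -(hpiZ dj) !qlact_hpi (is_linearZ (lact_linear2 bm b)) (hpiZ dj).
  + move=> n; have [m [c [c0 H]]] := dist_im_lact n; exists m, c => b u.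
    rewrite /qlact hquot_sn_hpi; apply: le_trans (H b (val u)) _.
    by rewrite ler_wpM2l ?mulr_ge0 ?smax_ge0 // (le_smax qsn u (leqnn m)).
- split; first split.
  + move=> b; split=> [u v|c u]; rewrite -(hpi_val u) ?(-(hpi_val v)).
      by rewrite -(hpiD dj) !qract_hpi (is_linearD (ract_linear1 bm b)) (hpiD dj).
    by rewrite -(hpiZ dj) !qract_hpi (is_linearZ (ract_linear1 bm b)) (hpiZ dj).
  + move=> u; split=> [a a'|c a]; rewrite /qract.
      by rewrite (is_linearD (ract_linear2 bm _)) (hpiD dj).
    by rewrite (is_linearZ (ract_linear2 bm _)) (hpiZ dj).
  + move=> n; have [m [c [c0 H]]] := dist_im_ract n; exists m, c => u b.
    rewrite /qract hquot_sn_hpi; apply: le_trans (H b (val u)) _.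
    rewrite [X in _ <= X]mulrAC.
    by rewrite ler_wpM2l ?mulr_ge0 ?smax_ge0 // (le_smax qsn u (leqnn m)).
- split=> a b u; rewrite -(hpi_val u).
  + by rewrite !qlact_hpi (lactA bm).
  + by rewrite !qract_hpi (ractA bm).
  + by rewrite qlact_hpi !qract_hpi qlact_hpi (lractA bm).
- by split=> u; rewrite -(hpi_val u) ?qlact_hpi ?qract_hpi ?(lact1 bm) ?(ract1 bm).
Qed.
End QuotientBimodule.

(** * Density of the image of phi-check *)

Section Omega1.
Variables (A B : algType C) (pA : nat -> A -> RR) (pB : nat -> B -> RR).
Variables (phi : A -> B) (TA : lmodType C) (tA : nat -> TA -> RR) (tensA : A -> A -> TA).
Variables (muA : TA -> A) (laA : A -> TA -> TA) (raA : TA -> A -> TA).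
Variables (OA : lmodType C) (oA : nat -> OA -> RR) (jA : OA -> TA).
Variables (TB : lmodType C) (tB : nat -> TB -> RR) (tensB : B -> B -> TB).
Variables (muB : TB -> B) (laB : B -> TB -> TB) (raB : TB -> B -> TB) (phiT : TA -> TB).
Variables (Q : lmodType C) (q : nat -> Q -> RR) (qt : B -> OA -> B -> Q) (chk : Q -> TB).
Hypotheses (hB : frechet_alg pB) (hphi : is_alg_hom phi) (cphi : cont_lin pA pB phi).
Hypotheses (hTA : is_proj_tensor pA pA tA tensA) (hmuA : is_mult_map pA tA tensA muA).
Hypothesis hOA : is_omega1 tA muA oA jA.
Hypotheses (hTB : is_proj_tensor pB pB tB tensB) (hmuB : is_mult_map pB tB tensB muB).
Hypotheses (hactB : tensor_actions tB tensB laB raB).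
Hypothesis hphiT : is_tensor_map tA tB tensA tensB phi phiT.
Hypotheses (hQ : is_bal_tensor pB oA phi laA raA jA q qt).
Hypothesis hchk : is_check_map q tB qt jA phiT laB raB chk.

Local Notation dB := (univ_der tensB).

Let mB : jcont2 pB pB pB (fun x y : B => x * y). Proof. by case: hB. Qed.
Let fTB := tensor_frechet hTB.
Let chkl : is_linear chk. Proof. by case: hchk. Qed.
Let chkc : cont_lin q tB chk. Proof. by case: hchk. Qed.
Let chkE b w c : chk (qt b w c) = laB b (raB (phiT (jA w)) c). Proof. by case: hchk. Qed.

Lemma mult_phiT_omega1 w : muB (phiT (jA w)) = 0.
Proof.
rewrite (mult_map_natural hB hphi cphi hTA hmuA hmuB hphiT).
by case: hOA => _ _ -> _ _; case: hphi => phil _ _; rewrite (is_linear0 phil).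
Qed.

Section VanishingDerivation.
Variables (X : lmodType C) (pX : nat -> X -> RR) (l : B -> X -> X) (r : X -> B -> X).
Variables (bm : frechet_bimod pB pX l r) (D : B -> X) (hD : is_der pB pX id l r D).
Hypothesis D_phi : forall a, D (phi a) = 0.
Variables (T : TB -> X) (Tl : is_linear T) (Tc : cont_lin tB pX T).
Hypothesis TE : forall x y, T (tensB x y) = l x (D y).

Let fX := bimod_frechet bm.

Lemma der_lift_phiT x : T (phiT x) = 0.
Proof.
case: hphiT => phiTl phiTc phiTE; move: x.
apply: (proj_tensor_ext hTA fX); [exact: is_linear_comp phiTl Tl | exact: cont_lin_comp phiTc Tc |
  exact: is_linear_cst0 | exact: cont_lin0 (frechet_seminorm fX) |].
by move=> v w; rewrite phiTE TE D_phi (is_linear0 (lact_linear2 bm _)).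
Qed.

Lemma der_lift_check y : T (chk y) = 0.
Proof.
move: y; apply: (bal_tensor_ext hQ fX); [exact: is_linear_comp chkl Tl | exact: cont_lin_comp chkc Tc |
  exact: is_linear_cst0 | exact: cont_lin0 (frechet_seminorm fX) |].
move=> b w c; rewrite chkE (der_lift_lact bm hTB hactB Tl Tc TE).
rewrite (der_lift_ract bm hD hTB hmuB hactB Tl Tc TE) der_lift_phiT mult_phiT_omega1.
rewrite (is_linear0 (ract_linear1 bm c)) (is_linear0 (lact_linear1 bm (D c))) addr0.
exact: is_linear0 (lact_linear2 bm b).
Qed.
End VanishingDerivation.

Lemma dense_omega1_der_restr_inj : dense_in_omega1 tB muB chk -> der_restr_inj pB phi.
Proof.
move=> dense; apply/der_restr_injP => X pX l r bm D hD D_phi b.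
have [T [Tl Tc TE]] := der_lift_exists bm hD hTB.
rewrite -(der_lift_diff bm hD Tl TE b).
apply: (cont_lin_vanish_closure (bimod_frechet bm) Tl Tc (der_lift_check bm hD D_phi Tl Tc TE)).
apply: dense; rewrite (is_linearB (mult_map_linear hmuB)) !(mult_mapE hmuB).
by rewrite mul1r mulr1 subrr.
Qed.

Lemma bal_tensor_lmul b : exists g : Q -> Q,
  [/\ is_linear g, cont_lin q q g & forall b' w c, g (qt b' w c) = qt (b * b') w c].
Proof.
case: (hQ) => fQ [h1 h2 h3] qtc [bal1 bal2] UQ.
have ft : is_trilinear (fun b' w c => qt (b * b') w c).
  split=> [w c|u c|u w]; [|exact: h2|exact: h3].
  by apply: is_linear_comp (h1 w c); split=> [x1 x2|a x1]; [exact: mulrDr | rewrite scalerAr].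
have fc : jcont3 pB oA pB q (fun b' w c => qt (b * b') w c).
  exact: jcont3_compr qtc (jcont2_contr b mB) (cont_lin_id oA) (cont_lin_id pB).
have fbal : balanced phi laA raA jA (fun b' w c => qt (b * b') w c).
  split=> a b' w w' c hw; first by rewrite mulrA (bal1 a (b * b') w w' c hw).
  exact: (bal2 a (b * b') w w' c hw).
by have [g [[gl gc gE] _]] := UQ Q q fQ _ ft fc fbal; exists g.
Qed.

Lemma bal_tensor_rmul c : exists g : Q -> Q,
  [/\ is_linear g, cont_lin q q g & forall b w c', g (qt b w c') = qt b w (c' * c)].
Proof.
case: (hQ) => fQ [h1 h2 h3] qtc [bal1 bal2] UQ.
have ft : is_trilinear (fun b w c' => qt b w (c' * c)).
  split=> [w c'|u c'|u w]; [exact: h1|exact: h2|].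
  by apply: is_linear_comp (h3 u w); split=> [x1 x2|a x1]; [exact: mulrDl | rewrite scalerAl].
have fc : jcont3 pB oA pB q (fun b w c' => qt b w (c' * c)).
  exact: jcont3_compr qtc (cont_lin_id pB) (cont_lin_id oA) (jcont2_contl c mB).
have fbal : balanced phi laA raA jA (fun b w c' => qt b w (c' * c)).
  split=> a b w w' c' hw; first exact: (bal1 a b w w' (c' * c) hw).
  by rewrite (bal2 a b w w' (c' * c) hw) mulrA.
by have [g [[gl gc gE] _]] := UQ Q q fQ _ ft fc fbal; exists g.
Qed.

Lemma check_lact b y : exists y', laB b (chk y) = chk y'.
Proof.
have [g [gl gc gE]] := bal_tensor_lmul b; exists (g y); move: y.
apply: (bal_tensor_ext hQ fTB).
- exact: is_linear_comp chkl (tens_lact_linear hactB b).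
- exact: cont_lin_comp chkc (tens_lact_cont hactB b).
- exact: is_linear_comp gl chkl.
- exact: cont_lin_comp gc chkc.
- by move=> b' w c; rewrite gE !chkE (tens_lactA hTB hactB).
Qed.

Lemma check_ract c y : exists y', raB (chk y) c = chk y'.
Proof.
have [g [gl gc gE]] := bal_tensor_rmul c; exists (g y); move: y.
apply: (bal_tensor_ext hQ fTB).
- exact: is_linear_comp chkl (tens_ract_linear hactB c).
- exact: cont_lin_comp chkc (tens_ract_cont hactB c).
- exact: is_linear_comp gl chkl.
- exact: cont_lin_comp gc chkc.
- by move=> b w c'; rewrite gE !chkE (tens_lractA hTB hactB) (tens_ractA hTB hactB).
Qed.

Lemma univ_der_phi a : exists y, dB (phi a) = chk y.
Proof.
case: hOA => _ _ _ /(_ (tensA 1 a - tensA a 1)) [|w hw].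
  by rewrite (is_linearB (mult_map_linear hmuA)) !(mult_mapE hmuA) mul1r mulr1 subrr.
exists (qt 1 w 1); rewrite chkE (tens_lact1 hTB hactB) (tens_ract1 hTB hactB) hw.
case: hphiT => phiTl _ phiTE; case: hphi => _ _ phi1.
by rewrite (is_linearB phiTl) !phiTE phi1.
Qed.

Lemma der_restr_inj_dense_omega1 : der_restr_inj pB phi -> dense_in_omega1 tB muB chk.
Proof.
move=> /der_restr_injP inj.
pose bm := frechet_bimod_tensor hB hTB hactB.
pose dj := seminorm_family_dist_im (frechet_seminorm (bimod_frechet bm)) chkl.
have bmX := frechet_bimod_quot bm chkl check_lact check_ract.
have hD : is_der pB (@hquot_sn _ _ dj) id (qlact (bm := bm) (jl := chkl)) (qract (bm := bm) (jl := chkl)) (fun b => hpi dj (dB b)).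
  case: (is_der_univ_der hTB hactB) => ul uc uM; split.
  - exact: is_linear_comp ul (hpi_linear dj).
  - exact: cont_lin_comp uc (hpi_cont_quot bm chkl).
  - by move=> a b; rewrite uM (hpiD dj) (qlact_hpi bm chkl check_lact) (qract_hpi bm chkl check_ract).
have D0 b : hpi dj (dB b) = 0.
  apply: (inj _ _ _ _ bmX _ hD) => a; have [y ->] := univ_der_phi a.
  exact: hpi_image.
have Psi x : hpi dj (x - tensB (muB x) 1) = 0.
  move: x; apply: (proj_tensor_ext hTB (frechet_hquot dj (dist_im_complete fTB chkl))).
  - apply: is_linear_comp (hpi_linear dj); apply: is_linearB_fun; first exact: is_linear_id.
    exact: is_linear_comp (mult_map_linear hmuB) (tensor_linear1 1 hTB).
  - apply: cont_lin_comp (hpi_cont_quot bm chkl).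
    exact (cont_linB (frechet_seminorm fTB) (cont_lin_id tB)
      (cont_lin_comp (mult_map_cont hmuB) (jcont2_contl 1 (tensor_jcont hTB)))).
  - exact: is_linear_cst0.
  - exact: cont_lin0 (frechet_seminorm (frechet_hquot dj (dist_im_complete fTB chkl))).
  move=> v w; rewrite (mult_mapE hmuB).
  have -> : tensB v w - tensB (v * w) 1 = laB v (dB w).
    by rewrite /univ_der (is_linearB (tens_lact_linear hactB v)) !(tens_lactE hactB) mulr1.
  by rewrite -(qlact_hpi bm chkl check_lact) D0 -(hpi0 dj) (qlact_hpi bm chkl check_lact)
    (is_linear0 (tens_lact_linear hactB v)).
move=> x mx m e e0; have := hpi_eq0 (Psi x) m.
rewrite mx (is_linear0 (tensor_linear1 1 hTB)) subr0 => dx.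
by have [y hy] := dist_im_approx tB chk m x e0; exists y; rewrite dx add0r in hy.
Qed.
End Omega1.

Theorem theorem3p17
  (A B : algType C) (pA : nat -> A -> RR) (pB : nat -> B -> RR)
  (hA : frechet_alg pA) (hB : frechet_alg pB)
  (phi : A -> B) (hphi : is_alg_hom phi) (cphi : cont_lin pA pB phi)
  (* A ^(x) A, mu_A, its bimodule structure, Omega^1 A with j_A *)
  (TA : lmodType C) (tA : nat -> TA -> RR) (tensA : A -> A -> TA)
  (hTA : is_proj_tensor pA pA tA tensA)
  (muA : TA -> A) (hmuA : is_mult_map pA tA tensA muA)
  (laA : A -> TA -> TA) (raA : TA -> A -> TA) (hactA : tensor_actions tA tensA laA raA)
  (OA : lmodType C) (oA : nat -> OA -> RR) (jA : OA -> TA)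
  (hOA : is_omega1 tA muA oA jA)
  (* B ^(x) B, mu_B, its bimodule structure *)
  (TB : lmodType C) (tB : nat -> TB -> RR) (tensB : B -> B -> TB)
  (hTB : is_proj_tensor pB pB tB tensB)
  (muB : TB -> B) (hmuB : is_mult_map pB tB tensB muB)
  (laB : B -> TB -> TB) (raB : TB -> B -> TB) (hactB : tensor_actions tB tensB laB raB)
  (* phi ^(x) phi *)
  (phiT : TA -> TB) (hphiT : is_tensor_map tA tB tensA tensB phi phiT)
  (* B ^(x)_A Omega^1 A ^(x)_A B and phi-check (composed with j_B) *)
  (Q : lmodType C) (q : nat -> Q -> RR) (qt : B -> OA -> B -> Q)
  (hQ : is_bal_tensor pB oA phi laA raA jA q qt)
  (chk : Q -> TB) (hchk : is_check_map q tB qt jA phiT laB raB chk) :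
  (frechet_epi pB phi <-> der_restr_inj pB phi) /\
  (der_restr_inj pB phi <-> dense_in_omega1 tB muB chk).
Proof.
split; split.
- exact: frechet_epi_der_restr_inj.
- exact: der_restr_inj_frechet_epi.
- exact (der_restr_inj_dense_omega1 hB hphi hmuA hOA hTB hmuB hactB hphiT hQ hchk).
- exact (dense_omega1_der_restr_inj hB hphi cphi hTA hmuA hOA hTB hmuB hactB hphiT hQ hchk).
Qed.
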